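(* Let $\alpha\in(0,1)$, $T>0$, and let $y\in C^1([0,T])$. Fix $t\in(0,T)$, and for $n\in\mathbb{N}$ put $h=t/n$, $t_k=kh$, $y_k=y(t_k)$. Define the remainder $r_n$ by $$J^\alpha\delta^\alpha y_n = y_n - y_0 + r_n .$$ Then, setting $\beta:=\min(\alpha,1-\alpha)$, there are a constant $C$ depending only on $\alpha$ and $y$ and an $n_0$ such that for all $n\ge n_0$ (i.e. as $n\to\infty$ with $nh=t$) $$|r_n|\le C\,h^{\beta}\int_0^t (t-s)^{-\beta}\,|y'(s)|\,ds .$$
   Context: For $\beta>0$ and integers $j\ge 1$, the weights are $b_j(\beta)=j^\beta-(j-1)^\beta$. For a time step $h>0$, mesh points $t_k=kh$ and values $y_k=y(t_k)$, the discrete fractional integral (rectangle rule) and the L1 discretization of the Caputo derivative of order $\alpha\in(0,1)$ are $$J^\alpha y_n=\frac{h^\alpha}{\Gamma(1+\alpha)}\sum_{i=0}^{n-1} b_{n-i}(\alpha)\,y_{i+1},\qquad \delta^\alpha y_n=\frac{h^{-\alpha}}{\Gamma(2-\alpha)}\sum_{i=0}^{n-1} b_{n-i}(1-\alpha)\,(y_{i+1}-y_i).$$ The composition $J^\alpha\delta^\alpha y_n$ means $J^\alpha$ applied to the sequence $(\delta^\alpha y_k)_{k\ge1}$, i.e. $J^\alpha\delta^\alpha y_n=\frac{h^\alpha}{\Gamma(1+\alpha)}\sum_{i=0}^{n-1} b_{n-i}(\alpha)\,\delta^\alpha y_{i+1}$. *)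

From Stdlib Require Import Reals.
From Coquelicot Require Import Coquelicot.
Open Scope R_scope.

(* x^a for x >= 0, with the convention 0^a = 0 (used only with a > 0 at x = 0). *)
Definition rpow (x a : R) : R := if Rle_dec x 0 then 0 else Rpower x a.

Definition Gamma (x : R) : R :=
  RInt_gen (fun s => Rpower s (x - 1) * exp (- s)) (at_right 0) (Rbar_locally p_infty).

Definition bw (beta : R) (j : nat) : R :=
  rpow (INR j) beta - rpow (INR j - 1) beta.

Fixpoint sum_lt (f : nat -> R) (n : nat) : R :=
  match n with O => 0 | S m => sum_lt f m + f m end.

(* discrete fractional integral J^alpha applied to a sequence u (u k = value at t_k) *)
Definition Jd (alpha h : R) (u : nat -> R) (n : nat) : R :=
  Rpower h alpha / Gamma (1 + alpha) *
  sum_lt (fun i => bw alpha (n - i) * u (S i)) n.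

(* L1 discretization of the Caputo derivative *)
Definition deltad (alpha h : R) (u : nat -> R) (n : nat) : R :=
  Rpower h (- alpha) / Gamma (2 - alpha) *
  sum_lt (fun i => bw (1 - alpha) (n - i) * (u (S i) - u i)) n.

Definition JdeltaY (alpha h : R) (y : R -> R) (n : nat) : R :=
  Jd alpha h (deltad alpha h (fun k => y (INR k * h))) n.

From Stdlib Require Import Reals Lra Lia Classical_Prop.
From Coquelicot Require Import Coquelicot.
Open Scope R_scope.

(* Exchanging the two sums gives the exact identity
     J^alpha delta^alpha y_n = (Gamma(1+alpha) Gamma(2-alpha))^-1
                               * sum_{i<n} K_(n-i) (y_(i+1) - y_i),
   where K_j = sum_{q<j} b_(j-q)(alpha) b_(q+1)(1-alpha) is the discrete
   convolution of the two weight sequences.  Since y_n - y_0 telescopes, the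
   remainder is r_n = sum_{i<n} (K_(n-i)/G - 1) (y_(i+1) - y_i) with
   G = Gamma(1+alpha) Gamma(2-alpha), and the theorem follows from two facts:
   (a) the kernel estimate |K_j - G| <= 6 j^-beta, and
   (b) the weighted variation bound
         sum_{i<n} |y_(i+1) - y_i| (n-i)^-beta <= h^beta int_0^t (t-s)^-beta |y'(s)| ds,
       obtained from the fundamental theorem of calculus on each mesh
       interval, where (t-s)^-beta >= (t-t_i)^-beta.  A blockwise Chebyshev sum inequality
   shows that K decreases along multiples (K_(mj) <= K_j) with
   K_j - K_(mj) <= 6 j^-beta; hence K_j converges to L = inf K at rate j^-beta.
   The limit is identified by Abel summation: with x = e^-d, the generating
   function of the weights b_j(c) behaves like Gamma(1+c) d^-c as d -> 0
   (a Riemann sum of s^c e^-s), and the generating function of K is the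
   product of those of b(alpha) and b(1-alpha), so L = Gamma(1+alpha) Gamma(2-alpha). *)

Lemma sum_lt_S f n : sum_lt f (S n) = sum_lt f n + f n.
Proof. reflexivity. Qed.

Lemma sum_lt_ext f g n :
  (forall i, (i < n)%nat -> f i = g i) -> sum_lt f n = sum_lt g n.
Proof.
  induction n; simpl; intros H; auto.
  rewrite IHn by (intros; apply H; lia). rewrite H by lia. reflexivity.
Qed.

Lemma sum_lt_plus f g n : sum_lt (fun i => f i + g i) n = sum_lt f n + sum_lt g n.
Proof. induction n; simpl; [lra | rewrite IHn; lra]. Qed.

Lemma sum_lt_minus f g n : sum_lt (fun i => f i - g i) n = sum_lt f n - sum_lt g n.
Proof. induction n; simpl; [lra | rewrite IHn; lra]. Qed.

Lemma sum_lt_scal c f n : sum_lt (fun i => c * f i) n = c * sum_lt f n.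
Proof. induction n; simpl; [lra | rewrite IHn; lra]. Qed.

Lemma sum_lt_const c n : sum_lt (fun _ => c) n = INR n * c.
Proof. induction n; simpl sum_lt; [simpl; lra | rewrite IHn, S_INR; lra]. Qed.

Lemma sum_lt_le f g n :
  (forall i, (i < n)%nat -> f i <= g i) -> sum_lt f n <= sum_lt g n.
Proof.
  induction n; simpl; intros H; [lra |].
  assert (f n <= g n) by (apply H; lia).
  assert (sum_lt f n <= sum_lt g n) by (apply IHn; intros; apply H; lia). lra.
Qed.

Lemma sum_lt_nonneg f n : (forall i, (i < n)%nat -> 0 <= f i) -> 0 <= sum_lt f n.
Proof.
  intros H. replace 0 with (sum_lt (fun _ => 0) n) by (rewrite sum_lt_const; ring).
  apply sum_lt_le; auto.
Qed.

Lemma sum_lt_abs f n : Rabs (sum_lt f n) <= sum_lt (fun i => Rabs (f i)) n.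
Proof.
  induction n; simpl. { rewrite Rabs_R0; lra. }
  eapply Rle_trans; [apply Rabs_triang | lra].
Qed.

Lemma sum_lt_app f n m :
  sum_lt f (n + m) = sum_lt f n + sum_lt (fun i => f (n + i)%nat) m.
Proof.
  induction m; simpl. { rewrite Nat.add_0_r; lra. }
  rewrite Nat.add_succ_r; simpl. rewrite IHm; lra.
Qed.

Lemma sum_lt_mono f n m :
  (n <= m)%nat -> (forall i, (i < m)%nat -> 0 <= f i) -> sum_lt f n <= sum_lt f m.
Proof.
  intros Hnm H. replace m with (n + (m - n))%nat by lia. rewrite sum_lt_app.
  assert (0 <= sum_lt (fun i => f (n + i)%nat) (m - n))
    by (apply sum_lt_nonneg; intros; apply H; lia). lra.
Qed.

Lemma sum_lt_extend_zero (f : nat -> R) k n :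
  (k <= n)%nat -> (forall i, (k <= i)%nat -> f i = 0) -> sum_lt f k = sum_lt f n.
Proof.
  intros Hk Hz. replace n with (k + (n - k))%nat by lia. rewrite sum_lt_app.
  rewrite (sum_lt_ext (fun i => f (k + i)%nat) (fun _ => 0)) by (intros; apply Hz; lia).
  rewrite sum_lt_const. ring.
Qed.

Lemma sum_lt_swap (F : nat -> nat -> R) n m :
  sum_lt (fun i => sum_lt (fun j => F i j) m) n =
  sum_lt (fun j => sum_lt (fun i => F i j) n) m.
Proof.
  induction n; simpl.
  - rewrite sum_lt_const. ring.
  - rewrite IHn, <- sum_lt_plus. reflexivity.
Qed.

Lemma sum_lt_telescope f n : sum_lt (fun i => f (S i) - f i) n = f n - f O.
Proof. induction n; simpl; [lra | rewrite IHn; lra]. Qed.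

Lemma sum_lt_blocks (F : nat -> R) m j :
  sum_lt F (m * j) = sum_lt (fun r => sum_lt (fun i => F (m * r + i)%nat) m) j.
Proof.
  induction j; simpl. { rewrite Nat.mul_0_r; reflexivity. }
  replace (m * S j)%nat with (m * j + m)%nat by lia.
  rewrite sum_lt_app, IHj. reflexivity.
Qed.

(* Summing over the triangle {(q, p) : q + p < N} by diagonals or by rows. *)
Lemma sum_lt_triangle (G : nat -> nat -> R) N :
  sum_lt (fun j => sum_lt (fun q => G q (j - q)%nat) (S j)) N =
  sum_lt (fun q => sum_lt (fun p => G q p) (N - q)) N.
Proof.
  induction N. { reflexivity. }
  change (sum_lt (fun j => sum_lt (fun q => G q (j - q)%nat) (S j)) N
            + sum_lt (fun q => G q (N - q)%nat) (S N)
          = sum_lt (fun q => sum_lt (fun p => G q p) (S N - q)) N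
            + sum_lt (fun p => G N p) (S N - N)).
  rewrite IHN. replace (S N - N)%nat with 1%nat by lia.
  rewrite (sum_lt_ext (fun q => sum_lt (fun p => G q p) (S N - q))
             (fun q => sum_lt (fun p => G q p) (N - q) + G q (N - q)%nat)).
  2:{ intros i Hi. replace (S N - i)%nat with (S (N - i)) by lia. reflexivity. }
  rewrite sum_lt_plus. simpl. replace (N - N)%nat with O by lia. lra.
Qed.

Lemma sum_lt_prod_expand (u v : nat -> R) a b m :
  sum_lt (fun i => (u i - a) * (v i - b)) m =
  sum_lt (fun i => u i * v i) m - a * sum_lt v m - b * sum_lt u m + INR m * a * b.
Proof. induction m; simpl sum_lt; [simpl; ring | rewrite IHm, S_INR; ring]. Qed.

Lemma chebyshev_sum (u v : nat -> R) m :
  (forall i k, (i <= k < m)%nat -> v i <= v k) ->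
  (forall i k, (i <= k < m)%nat -> u k <= u i) ->
  INR m * sum_lt (fun i => u i * v i) m <= sum_lt u m * sum_lt v m.
Proof.
  induction m; intros Hv Hu. { simpl; lra. }
  assert (IH : INR m * sum_lt (fun i => u i * v i) m <= sum_lt u m * sum_lt v m)
    by (apply IHm; intros; [apply Hv | apply Hu]; lia).
  assert (Hneg : sum_lt (fun i => (u i - u m) * (v i - v m)) m <= 0).
  { replace 0 with (sum_lt (fun _ => 0) m) by (rewrite sum_lt_const; ring).
    apply sum_lt_le. intros i Hi.
    assert (v i <= v m) by (apply Hv; lia). assert (u m <= u i) by (apply Hu; lia). nra. }
  rewrite sum_lt_prod_expand in Hneg.
  simpl sum_lt. rewrite S_INR. nra.
Qed.

Lemma Rpower_pos x c : 0 < Rpower x c.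
Proof. apply exp_pos. Qed.

Lemma Rpower_1_base e : Rpower 1 e = 1.
Proof. unfold Rpower. rewrite ln_1, Rmult_0_r, exp_0. reflexivity. Qed.

Lemma rpow_pos x c : 0 < x -> rpow x c = Rpower x c.
Proof. intros. unfold rpow. destruct (Rle_dec x 0); [lra | auto]. Qed.

Lemma rpow_nonpos x c : x <= 0 -> rpow x c = 0.
Proof. intros. unfold rpow. destruct (Rle_dec x 0); [auto | lra]. Qed.

Lemma rpow_nonneg x c : 0 <= rpow x c.
Proof. unfold rpow. destruct (Rle_dec x 0); [lra | left; apply Rpower_pos]. Qed.

Lemma INR_pos1 k : (1 <= k)%nat -> 0 < INR k.
Proof. intros; apply lt_0_INR; lia. Qed.

Lemma exp_le_mono x y : x <= y -> exp x <= exp y.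
Proof. intros [H | H]; [left; apply exp_increasing; auto | subst; lra]. Qed.

Lemma exp_mul_opp x : exp x * exp (- x) = 1.
Proof. rewrite <- exp_plus, Rplus_opp_r. apply exp_0. Qed.

Lemma Rpower_antitone x y e : 0 < y <= x -> e <= 0 -> Rpower x e <= Rpower y e.
Proof.
  intros Hxy He. replace e with (- (- e)) by ring.
  rewrite (Rpower_Ropp x (- e)), (Rpower_Ropp y (- e)).
  apply Rinv_le_contravar; [apply Rpower_pos | apply Rle_Rpower_l; lra].
Qed.

Lemma bernoulli c x : 0 < c < 1 -> 0 < x -> Rpower x c <= 1 + c * (x - 1).
Proof.
  intros Hc Hx.
  assert (Hmin : 0 < Rmin 1 x) by (apply Rmin_pos; lra).
  destruct (MVT_gen (fun u => Rpower u c) 1 x (fun u => c * Rpower u (c - 1)))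
    as [xi [Hxi Heq]].
  - intros u Hu. apply is_derive_Reals. apply derivable_pt_lim_power. lra.
  - intros u Hu. apply derivable_continuous_pt. exists (c * Rpower u (c - 1)).
    apply derivable_pt_lim_power. lra.
  - rewrite Rpower_1_base in Heq. pose proof (Rpower_pos xi (c - 1)).
    destruct (Rle_lt_dec x 1).
    + rewrite Rmin_right, Rmax_left in Hxi by lra.
      (* xi <= 1, so xi^(c-1) >= 1 *)
      assert (Hxi1 : Rpower xi (1 - c) <= 1)
        by (rewrite <- (Rpower_1_base (1 - c)) at 2; apply Rle_Rpower_l; lra).
      assert (1 <= Rpower xi (c - 1)).
      { replace (c - 1) with (- (1 - c)) by ring. rewrite Rpower_Ropp.
        pose proof (Rinv_le_contravar _ _ (Rpower_pos xi (1 - c)) Hxi1) as Hinv.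
        rewrite Rinv_1 in Hinv. exact Hinv. }
      assert (0 <= c * (1 - x) * (Rpower xi (c - 1) - 1))
        by (apply Rmult_le_pos; [apply Rmult_le_pos |]; lra). nra.
    + rewrite Rmin_left, Rmax_right in Hxi by lra.
      assert (Rpower xi (c - 1) <= 1)
        by (rewrite <- (Rpower_O xi) at 2 by lra; apply Rle_Rpower; lra).
      assert (0 <= c * (x - 1) * (1 - Rpower xi (c - 1)))
        by (apply Rmult_le_pos; [apply Rmult_le_pos |]; lra). nra.
Qed.

(** * The weights [b_j(c) = j^c - (j-1)^c] for 0 < c < 1 *)

Definition ipow (c : R) (k : nat) : R := rpow (INR k) c.

Lemma bw_S c k : bw c (S k) = ipow c (S k) - ipow c k.
Proof. unfold bw, ipow. rewrite S_INR. f_equal. f_equal. ring. Qed.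

Lemma ipow_0 c : ipow c 0 = 0.
Proof. apply rpow_nonpos; simpl; lra. Qed.

Lemma ipow_1 c : ipow c 1 = 1.
Proof. unfold ipow; simpl. rewrite rpow_pos by lra. apply Rpower_1_base. Qed.

Lemma bw_0 c : bw c 0 = 0.
Proof. unfold bw. simpl. rewrite !rpow_nonpos; lra. Qed.

Lemma bw_1 c : bw c 1 = 1.
Proof. rewrite bw_S, ipow_0, ipow_1. ring. Qed.

Lemma ipow_homog c m k : (1 <= m)%nat -> ipow c (m * k) = Rpower (INR m) c * ipow c k.
Proof.
  intros Hm. destruct k. { rewrite Nat.mul_0_r, !ipow_0. ring. }
  unfold ipow. rewrite mult_INR.
  assert (0 < INR m) by (apply INR_pos1; auto).
  assert (0 < INR (S k)) by (apply INR_pos1; lia).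
  rewrite !rpow_pos by nra. rewrite Rpower_mult_distr; auto.
Qed.

Lemma bw_nonneg c k : 0 < c -> 0 <= bw c k.
Proof.
  intros Hc. destruct k as [| [| k]].
  - rewrite bw_0; lra.
  - rewrite bw_1; lra.
  - unfold bw. rewrite !rpow_pos by (rewrite !S_INR; pose proof (pos_INR k); lra).
    assert (Rpower (INR (S (S k)) - 1) c <= Rpower (INR (S (S k))) c)
      by (apply Rle_Rpower_l; [lra | rewrite !S_INR; pose proof (pos_INR k); lra]).
    lra.
Qed.

(* b_(k+1)(c) <= k^(c-1): the mean value bound from concavity. *)
Lemma bw_bound c k : 0 < c < 1 -> (1 <= k)%nat -> bw c (S k) <= Rpower (INR k) (c - 1).
Proof.
  intros Hc Hk. rewrite bw_S. unfold ipow.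
  assert (Hk0 : 0 < INR k) by (apply INR_pos1; auto).
  assert (Hinv : 0 < / INR k) by (apply Rinv_0_lt_compat; lra).
  rewrite !rpow_pos by (try apply INR_pos1; lia).
  rewrite S_INR. replace (INR k + 1) with (INR k * (1 + / INR k)) by (field; lra).
  rewrite <- Rpower_mult_distr by lra.
  pose proof (bernoulli c (1 + / INR k) Hc ltac:(lra)).
  pose proof (Rpower_pos (INR k) c).
  assert (Hdiv : Rpower (INR k) (c - 1) = Rpower (INR k) c * / INR k).
  { unfold Rminus. rewrite Rpower_plus, Rpower_Ropp, Rpower_1 by lra. reflexivity. }
  rewrite Hdiv.
  assert (0 <= Rpower (INR k) c * / INR k * (1 - c))
    by (apply Rmult_le_pos; [apply Rmult_le_pos |]; lra).
  nra.
Qed.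

Lemma bw_decr c k : 0 < c < 1 -> bw c (S (S k)) <= bw c (S k).
Proof.
  intros Hc. rewrite !bw_S. destruct k.
  - rewrite ipow_0, ipow_1. unfold ipow. rewrite rpow_pos by (simpl; lra).
    pose proof (bernoulli c (INR 2) Hc ltac:(simpl; lra)). simpl in *. lra.
  - set (x := INR (S (S k))).
    assert (Hx : 2 <= x) by (unfold x; rewrite !S_INR; pose proof (pos_INR k); lra).
    unfold ipow. rewrite !rpow_pos by (apply INR_pos1; lia).
    assert (E1 : INR (S (S (S k))) = x * (1 + / x))
      by (rewrite (S_INR (S (S k))); fold x; field; lra).
    assert (E2 : INR (S k) = x * (1 - / x))
      by (replace (INR (S k)) with (x - 1) by (unfold x; rewrite (S_INR (S k)); ring); field; lra).
    rewrite E1, E2. fold x.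
    assert (0 < / x) by (apply Rinv_0_lt_compat; lra).
    assert (/ x <= / 2) by (apply Rinv_le_contravar; lra).
    rewrite <- !Rpower_mult_distr by lra.
    pose proof (bernoulli c (1 + / x) Hc ltac:(lra)).
    pose proof (bernoulli c (1 - / x) Hc ltac:(lra)).
    pose proof (Rpower_pos x c).
    assert (0 <= Rpower x c * (2 - (Rpower (1 + / x) c + Rpower (1 - / x) c)))
      by (apply Rmult_le_pos; lra).
    nra.
Qed.

Lemma bw_anti c k l : 0 < c < 1 -> (1 <= k <= l)%nat -> bw c l <= bw c k.
Proof.
  intros Hc [Hk Hl]. induction Hl; [lra |].
  destruct m; [lia |]. eapply Rle_trans; [apply bw_decr | ]; auto.
Qed.

(* A block of m consecutive weights telescopes: sum_{i<m} b_(mk+i+1) = m^c b_(k+1). *)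
Lemma bw_block_sum c m k : (1 <= m)%nat ->
  sum_lt (fun i => bw c (S (m * k + i))) m = Rpower (INR m) c * bw c (S k).
Proof.
  intros Hm.
  rewrite (sum_lt_ext _ (fun i => ipow c (m * k + S i) - ipow c (m * k + i))).
  2:{ intros; rewrite bw_S, Nat.add_succ_r; reflexivity. }
  rewrite (sum_lt_telescope (fun i => ipow c (m * k + i)%nat)).
  rewrite Nat.add_0_r. replace (m * k + m)%nat with (m * S k)%nat by lia.
  rewrite !ipow_homog by auto. rewrite bw_S. ring.
Qed.

Lemma bw_block_sum_rev c m s : (1 <= m)%nat -> (1 <= s)%nat ->
  sum_lt (fun i => bw c (m * s - i)) m = Rpower (INR m) c * bw c s.
Proof.
  intros Hm Hs.
  rewrite (sum_lt_ext _ (fun i => (- ipow c (m * s - S i)) - (- ipow c (m * s - i)))).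
  2:{ intros i Hi. replace (m * s - i)%nat with (S (m * s - S i)) by nia.
      rewrite bw_S. ring. }
  rewrite (sum_lt_telescope (fun i => - ipow c (m * s - i))).
  replace (m * s - m)%nat with (m * (s - 1))%nat by nia. rewrite Nat.sub_0_r.
  rewrite !ipow_homog by auto. replace s with (S (s - 1)) at 3 by lia. rewrite bw_S.
  replace (S (s - 1)) with s by lia. ring.
Qed.

(* m^c b_(k+1)(c) <= m b_(mk)(c): the block average dominates its last term. *)
Lemma bw_block_avg c m k : 0 < c < 1 -> (1 <= m)%nat -> (1 <= k)%nat ->
  Rpower (INR m) c * bw c (S k) <= INR m * bw c (m * k).
Proof.
  intros Hc Hm Hk. rewrite <- bw_block_sum, <- sum_lt_const by auto.
  apply sum_lt_le. intros i Hi. apply bw_anti; auto. nia.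
Qed.

(** * The convolution kernel [K_j = sum_{q<j} b_(j-q)(A) b_(q+1)(B)] *)

Definition kernel (A B : R) (j : nat) : R :=
  sum_lt (fun q => bw A (j - q) * bw B (S q)) j.

Lemma kernel_nonneg A B j : 0 < A -> 0 < B -> 0 <= kernel A B j.
Proof. intros. apply sum_lt_nonneg. intros. apply Rmult_le_pos; apply bw_nonneg; auto. Qed.

Lemma kernel_1 A B : kernel A B 1 = 1.
Proof. unfold kernel. simpl. rewrite bw_1. replace (1 - 0)%nat with 1%nat by lia. rewrite bw_1. ring. Qed.

(* When A + B = 1, K_(mj) is compared with K_j by cutting its sum into j
   blocks of length m; on each block Chebyshev's inequality applies. *)
Section KernelBlocks.
Variables A B : R.
Hypothesis HA : 0 < A < 1.
Hypothesis HB : 0 < B < 1.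
Hypothesis HAB : A + B = 1.

Lemma Rpower_split m : (1 <= m)%nat -> Rpower (INR m) A * Rpower (INR m) B = INR m.
Proof. intros. rewrite <- Rpower_plus, HAB. apply Rpower_1, INR_pos1; auto. Qed.

Definition kernel_block (m j r : nat) : R :=
  sum_lt (fun i => bw A (m * j - (m * r + i)) * bw B (S (m * r + i))) m.

Lemma kernel_blocks m j : kernel A B (m * j) = sum_lt (kernel_block m j) j.
Proof. apply sum_lt_blocks. Qed.

(* Inside block r, the B-weights decrease and the A-weights (indices
   m(j-r) - i) increase with i. *)
Lemma kernel_block_eq m j r : (r < j)%nat -> kernel_block m j r =
  sum_lt (fun i => bw B (S (m * r + i)) * bw A (m * (j - r) - i)) m.
Proof.
  intros. apply sum_lt_ext. intros i Hi.
  replace (m * j - (m * r + i))%nat with (m * (j - r) - i)%nat by nia. ring.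
Qed.

Lemma kernel_block_upper m j r : (1 <= m)%nat -> (r < j)%nat ->
  kernel_block m j r <= bw A (j - r) * bw B (S r).
Proof.
  intros Hm Hr. rewrite kernel_block_eq by auto.
  pose proof (chebyshev_sum (fun i => bw B (S (m * r + i))) (fun i => bw A (m * (j - r) - i)) m)
    as Hcheb.
  rewrite bw_block_sum, bw_block_sum_rev in Hcheb by lia.
  assert (Hm0 : 0 < INR m) by (apply INR_pos1; auto).
  apply (Rmult_le_reg_l (INR m)); auto.
  rewrite <- (Rpower_split m) at 2 by auto.
  eapply Rle_trans; [apply Hcheb | lra];
    intros i k Hik; apply bw_anti; auto; nia.
Qed.

Lemma kernel_block_lower_l m j r : (1 <= m)%nat -> (r < j)%nat ->
  bw B (S r) * bw A (S (j - r)) <= kernel_block m j r.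
Proof.
  intros Hm Hr. rewrite kernel_block_eq by auto.
  set (s := (j - r)%nat).
  assert (Hm0 : 0 < INR m) by (apply INR_pos1; auto).
  (* every A-weight in the block dominates the first one, b_(ms)(A) *)
  assert (L1 : sum_lt (fun i => bw B (S (m * r + i))) m * bw A (m * s)
               <= sum_lt (fun i => bw B (S (m * r + i)) * bw A (m * s - i)) m).
  { rewrite Rmult_comm, <- sum_lt_scal. apply sum_lt_le. intros i Hi.
    assert (bw A (m * s) <= bw A (m * s - i)) by (apply bw_anti; auto; unfold s; nia).
    pose proof (bw_nonneg B (S (m * r + i)) ltac:(lra)). nra. }
  rewrite bw_block_sum in L1 by auto.
  pose proof (bw_block_avg A m s HA Hm ltac:(unfold s; lia)) as Havg.
  pose proof (Rpower_pos (INR m) B). pose proof (bw_nonneg B (S r) ltac:(lra)).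
  apply (Rmult_le_reg_l (INR m)); auto.
  rewrite <- (Rpower_split m) at 1 by auto.
  assert (Rpower (INR m) B * bw B (S r) * (Rpower (INR m) A * bw A (S s))
          <= Rpower (INR m) B * bw B (S r) * (INR m * bw A (m * s)))
    by (apply Rmult_le_compat_l; [apply Rmult_le_pos |]; lra).
  nra.
Qed.

Lemma kernel_block_lower_r m j r : (1 <= m)%nat -> (r < j)%nat ->
  bw A (j - r) * bw B (S (S r)) <= kernel_block m j r.
Proof.
  intros Hm Hr. rewrite kernel_block_eq by auto.
  set (s := (j - r)%nat).
  assert (Hm0 : 0 < INR m) by (apply INR_pos1; auto).
  (* every B-weight in the block dominates the last one, b_(m(r+1))(B) *)
  assert (L2 : bw B (m * S r) * sum_lt (fun i => bw A (m * s - i)) m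
               <= sum_lt (fun i => bw B (S (m * r + i)) * bw A (m * s - i)) m).
  { rewrite <- sum_lt_scal. apply sum_lt_le. intros i Hi.
    assert (bw B (m * S r) <= bw B (S (m * r + i))) by (apply bw_anti; auto; nia).
    pose proof (bw_nonneg A (m * s - i) ltac:(lra)). nra. }
  rewrite bw_block_sum_rev in L2 by (unfold s; lia).
  pose proof (bw_block_avg B m (S r) HB Hm ltac:(lia)) as Havg.
  pose proof (Rpower_pos (INR m) A). pose proof (bw_nonneg A s ltac:(lra)).
  apply (Rmult_le_reg_l (INR m)); auto.
  rewrite <- (Rpower_split m) at 1 by auto.
  assert (Rpower (INR m) A * bw A s * (Rpower (INR m) B * bw B (S (S r)))
          <= Rpower (INR m) A * bw A s * (INR m * bw B (m * S r)))
    by (apply Rmult_le_compat_l; [apply Rmult_le_pos |]; lra).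
  nra.
Qed.

Lemma kernel_mult_le m j : (1 <= m)%nat -> kernel A B (m * j) <= kernel A B j.
Proof.
  intros Hm. rewrite kernel_blocks. apply sum_lt_le. intros r Hr.
  apply kernel_block_upper; auto.
Qed.

(* Cutting the block index at R: blocks r < R lose at most the first
   A-weight, blocks r >= R lose at most the first B-weight. *)
Lemma kernel_mult_gap m j R : (1 <= m)%nat -> (R <= j)%nat ->
  kernel A B j - kernel A B (m * j) <= bw A (S (j - R)) + bw B (S R).
Proof.
  intros Hm HR. rewrite kernel_blocks. unfold kernel. rewrite <- sum_lt_minus.
  set (X := bw A (S (j - R))). set (Y := bw B (S R)).
  set (d1 := fun r => bw B (S r) - bw B (S (S r))).
  set (d2 := fun r => bw A (j - r) - bw A (S (j - r))).
  assert (S1 : sum_lt d1 j <= 1).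
  { unfold d1. rewrite (sum_lt_ext _ (fun r => (- bw B (S (S r))) - (- bw B (S r)))) by (intros; ring).
    rewrite (sum_lt_telescope (fun r => - bw B (S r))), bw_1.
    pose proof (bw_nonneg B (S j) ltac:(lra)). lra. }
  assert (S2 : sum_lt d2 j <= 1).
  { unfold d2. rewrite (sum_lt_ext _ (fun r => bw A (S (j - S r)) - bw A (S (j - r)))).
    2:{ intros r Hr. replace (S (j - S r)) with (j - r)%nat by lia. reflexivity. }
    rewrite (sum_lt_telescope (fun r => bw A (S (j - r)))), Nat.sub_diag, Nat.sub_0_r, bw_1.
    pose proof (bw_nonneg A (S j) ltac:(lra)). lra. }
  assert (D1 : forall r, 0 <= d1 r) by (intros; unfold d1; pose proof (bw_decr B r HB); lra).
  assert (D2 : forall r, (r < j)%nat -> 0 <= d2 r).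
  { intros r Hr; unfold d2. replace (j - r)%nat with (S (j - r - 1)) by lia.
    pose proof (bw_decr A (j - r - 1) HA). lra. }
  assert (X0 : 0 <= X) by (apply bw_nonneg; lra). assert (Y0 : 0 <= Y) by (apply bw_nonneg; lra).
  apply Rle_trans with (sum_lt (fun r => X * d1 r + Y * d2 r) j).
  - apply sum_lt_le. intros r Hr.
    pose proof (kernel_block_lower_l m j r Hm Hr). pose proof (kernel_block_lower_r m j r Hm Hr).
    pose proof (D1 r). pose proof (D2 r Hr). unfold d1, d2 in *.
    destruct (Nat.lt_ge_cases r R) as [HrR | HrR].
    + assert (bw A (j - r) <= X) by (apply bw_anti; auto; lia).
      assert (0 <= Y * (bw A (j - r) - bw A (S (j - r)))) by (apply Rmult_le_pos; auto).
      nra.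
    + assert (bw B (S r) <= Y) by (apply bw_anti; auto; lia).
      assert (0 <= X * (bw B (S r) - bw B (S (S r)))) by (apply Rmult_le_pos; auto).
      nra.
  - rewrite sum_lt_plus, !sum_lt_scal. nra.
Qed.

End KernelBlocks.

Lemma Rpower_scale_bound (k : R) x J e :
  1 <= k -> 0 < x -> 0 < J -> J <= k * x -> -1 <= e <= 0 ->
  Rpower x e <= k * Rpower J e.
Proof.
  intros Hk Hx HJ HJx He.
  assert (H1 : Rpower (k * x) e <= Rpower J e) by (apply Rpower_antitone; nra).
  rewrite <- Rpower_mult_distr in H1 by lra.
  assert (H2 : Rpower k (Ropp 1) <= Rpower k e) by (apply Rle_Rpower; lra).
  rewrite Rpower_Ropp, Rpower_1 in H2 by lra.
  pose proof (Rpower_pos x e).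
  assert (/ k * Rpower x e <= Rpower k e * Rpower x e) by (apply Rmult_le_compat_r; lra).
  assert (Rpower x e = k * (/ k * Rpower x e)) by (field; lra).
  assert (0 < / k) by (apply Rinv_0_lt_compat; lra).
  nra.
Qed.

Lemma kernel_le_1 A B j : 0 < A < 1 -> 0 < B < 1 -> A + B = 1 -> (1 <= j)%nat ->
  kernel A B j <= 1.
Proof.
  intros. pose proof (kernel_mult_le A B H H0 H1 j 1 H2) as Hm.
  rewrite Nat.mul_1_r, kernel_1 in Hm. exact Hm.
Qed.

(* Quantitative form of the Cauchy property: K_j - K_(mj) <= 6 j^-beta,
   using the gap bound with R = floor(j/2) and b_(k+1)(c) <= k^(c-1). *)
Lemma kernel_mult_rate A B beta : 0 < A < 1 -> 0 < B < 1 -> A + B = 1 ->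
  0 < beta -> beta <= A -> beta <= B ->
  forall m j, (1 <= m)%nat -> (1 <= j)%nat ->
  kernel A B j - kernel A B (m * j) <= 6 * Rpower (INR j) (- beta).
Proof.
  intros HA HB HAB Hb HbA HbB m j Hm Hj.
  destruct (Nat.eq_dec j 1) as [-> | Hj2].
  { rewrite kernel_1. simpl INR. rewrite Rpower_1_base.
    pose proof (kernel_nonneg A B (m * 1) ltac:(lra) ltac:(lra)). lra. }
  destruct (Nat.Even_or_Odd j) as [[R HR] | [R HR]];
    assert (HR1 : (1 <= R)%nat) by lia;
    assert (HRj : (2 * R <= j <= 2 * R + 1)%nat) by lia; clear HR.
  all: pose proof (kernel_mult_gap A B HA HB HAB m j R Hm ltac:(lia)) as HD;
    assert (X1 : bw A (S (j - R)) <= Rpower (INR (j - R)) (A - 1)) by (apply bw_bound; auto; lia);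
    assert (Y1 : bw B (S R) <= Rpower (INR R) (B - 1)) by (apply bw_bound; auto; lia);
    assert (HRr : 2 * INR R <= INR j <= 2 * INR R + 1)
      by (replace 2 with (INR 2) by reflexivity; rewrite <- mult_INR, <- S_INR;
          split; apply le_INR; lia);
    assert (HR1r : 1 <= INR R) by (replace 1 with (INR 1) by reflexivity; apply le_INR; lia);
    assert (X2 : Rpower (INR (j - R)) (A - 1) <= 2 * Rpower (INR j) (A - 1))
      by (apply Rpower_scale_bound; try lra; [apply INR_pos1; lia | rewrite minus_INR by lia; lra]);
    assert (Y2 : Rpower (INR R) (B - 1) <= 4 * Rpower (INR j) (B - 1))
      by (apply Rpower_scale_bound; lra);
    assert (Z1 : Rpower (INR j) (A - 1) <= Rpower (INR j) (- beta))
      by (apply Rle_Rpower; [apply (le_INR 1); lia | lra]);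
    assert (Z2 : Rpower (INR j) (B - 1) <= Rpower (INR j) (- beta))
      by (apply Rle_Rpower; [apply (le_INR 1); lia | lra]);
    lra.
Qed.

Lemma kernel_limit A B beta : 0 < A < 1 -> 0 < B < 1 -> A + B = 1 ->
  0 < beta -> beta <= A -> beta <= B ->
  exists L, 0 <= L /\ forall j, (1 <= j)%nat ->
    L <= kernel A B j /\ kernel A B j <= L + 6 * Rpower (INR j) (- beta).
Proof.
  intros HA HB HAB Hb HbA HbB.
  set (E := fun x => exists j, (1 <= j)%nat /\ x = - kernel A B j).
  assert (HE : forall x, E x -> x <= 0).
  { intros x [j [Hj ->]]. pose proof (kernel_nonneg A B j ltac:(lra) ltac:(lra)). lra. }
  destruct (completeness E (ex_intro _ 0 HE) (ex_intro _ _ (ex_intro _ 1%nat (conj (le_n 1) eq_refl))))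
    as [M [HM1 HM2]].
  exists (- M). split; [assert (M <= 0) by (apply HM2; exact HE); lra |].
  intros j Hj. split.
  - assert (- kernel A B j <= M) by (apply HM1; exists j; auto). lra.
  - assert (M <= 6 * Rpower (INR j) (- beta) - kernel A B j); [| lra].
    apply HM2. intros x [k [Hk ->]].
    pose proof (kernel_mult_rate A B beta HA HB HAB Hb HbA HbB k j Hk Hj).
    pose proof (kernel_mult_le A B HA HB HAB j k Hj). rewrite Nat.mul_comm in H0. lra.
Qed.

Lemma monotone_limit (F : (R -> Prop) -> Prop) {FF : Filter F} (D : R -> Prop) (h : R -> R) M :
  (exists x, D x) -> (forall x, D x -> h x <= M) -> F D ->
  (forall x0, D x0 -> F (fun x => D x /\ h x0 <= h x)) ->
  exists l, filterlim h F (locally l) /\ forall x, D x -> h x <= l.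
Proof.
  intros [x1 Hx1] HM HD Hmono.
  set (E := fun z => exists x, D x /\ z = h x).
  assert (Hb : bound E) by (exists M; intros z [x [Hx ->]]; auto).
  destruct (completeness E Hb (ex_intro _ (h x1) (ex_intro _ x1 (conj Hx1 eq_refl))))
    as [l [Hl1 Hl2]].
  assert (Hup : forall x, D x -> h x <= l) by (intros x Hx; apply Hl1; exists x; auto).
  exists l. split; auto.
  apply filterlim_locally. intros eps.
  assert (Hex : exists x0, D x0 /\ l - eps < h x0).
  { destruct (classic (exists x0, D x0 /\ l - eps < h x0)) as [H | H]; auto.
    exfalso. assert (l <= l - eps); [| destruct eps; simpl in *; lra].
    apply Hl2. intros z [x [Hx ->]].
    destruct (Rle_lt_dec (h x) (l - eps)); auto. exfalso; apply H; exists x; auto. }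
  destruct Hex as [x0 [Hx0 Hlt]].
  generalize (Hmono x0 Hx0). apply filter_imp. intros x [Hx Hle].
  pose proof (Hup x Hx). change (Rabs (h x - l) < eps). rewrite Rabs_left1 by lra. lra.
Qed.

Lemma is_RInt_gen_from_point (f : R -> R) a (Fb : (R -> Prop) -> Prop) {FFb : Filter Fb} l :
  Fb (fun b => ex_RInt f a b) -> filterlim (fun b => RInt f a b) Fb (locally l) ->
  is_RInt_gen f (at_point a) Fb l.
Proof.
  intros Hex Hlim.
  apply (filterlimi_lim_ext_loc (fun ab : R * R => RInt (V := R_CompleteNormedModule) f (fst ab) (snd ab))).
  - apply (Filter_prod _ _ _ (fun x => x = a) (fun b => ex_RInt f a b)); auto.
    + unfold at_point; auto.
    + intros x z -> Hz. simpl. apply (RInt_correct (V := R_CompleteNormedModule)); auto.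
  - apply filterlim_locally. intros eps. rewrite filterlim_locally in Hlim.
    apply Filter_prod with (Q := fun x => x = a) (R := fun b => ball l eps (RInt f a b));
      [reflexivity | apply Hlim | intros x z -> Hz; exact Hz].
Qed.

Lemma is_RInt_gen_to_point (f : R -> R) (Fa : (R -> Prop) -> Prop) {FFa : Filter Fa} b l :
  Fa (fun a => ex_RInt f a b) -> filterlim (fun a => RInt f a b) Fa (locally l) ->
  is_RInt_gen f Fa (at_point b) l.
Proof.
  intros Hex Hlim.
  apply (filterlimi_lim_ext_loc (fun ab : R * R => RInt (V := R_CompleteNormedModule) f (fst ab) (snd ab))).
  - apply (Filter_prod _ _ _ (fun a => ex_RInt f a b) (fun x => x = b)); auto.
    + unfold at_point; auto.
    + intros x z Hx ->. simpl. apply (RInt_correct (V := R_CompleteNormedModule)); auto.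
  - apply filterlim_locally. intros eps. rewrite filterlim_locally in Hlim.
    apply Filter_prod with (Q := fun a => ball l eps (RInt f a b)) (R := fun x => x = b);
      [apply Hlim | reflexivity | intros x z Hx ->; exact Hx].
Qed.

Lemma improper_at_infty (f : R -> R) a M :
  (forall x z, a <= x -> a <= z -> ex_RInt f x z) -> (forall x, a <= x -> 0 <= f x) ->
  (forall v, a <= v -> RInt f a v <= M) ->
  exists l, is_RInt_gen f (at_point a) (Rbar_locally p_infty) l /\
            forall v, a <= v -> RInt f a v <= l.
Proof.
  intros Hex Hpos HM.
  destruct (monotone_limit (Rbar_locally p_infty) (fun v => a <= v) (fun v => RInt f a v) M)
    as [l [Hl1 Hl2]].
  - exists a; lra.
  - exact HM.
  - exists a. intros; lra.
  - intros x0 Hx0. exists x0. intros x Hx. split; [lra |].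
    assert (E : RInt f a x0 + RInt f x0 x = RInt f a x) by (apply (RInt_Chasles f); apply Hex; lra).
    rewrite <- E.
    assert (0 <= RInt f x0 x) by (apply RInt_ge_0; [lra | apply Hex; lra | intros; apply Hpos; lra]).
    simpl. lra.
  - exists l. split; auto. apply is_RInt_gen_from_point; auto.
    apply (@filter_filter _ _ (Rbar_locally_filter p_infty)). simpl.
    exists a. intros x Hx. apply Hex; lra.
Qed.

Lemma improper_at_left (f : R -> R) a t M : a < t ->
  (forall x z, a <= x < t -> a <= z < t -> ex_RInt f x z) -> (forall x, a <= x < t -> 0 <= f x) ->
  (forall v, a <= v < t -> RInt f a v <= M) ->
  exists l, is_RInt_gen f (at_point a) (at_left t) l /\ forall v, a <= v < t -> RInt f a v <= l.
Proof.
  intros Hat Hex Hpos HM.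
  assert (Hnear : forall x0, a <= x0 < t -> at_left t (fun x => x0 <= x < t)).
  { intros x0 Hx0. exists (mkposreal (t - x0) ltac:(lra)). intros x Hx Hxt.
    change (Rabs (x - t) < t - x0) in Hx. rewrite Rabs_left in Hx by lra. lra. }
  destruct (monotone_limit (at_left t) (fun v => a <= v < t) (fun v => RInt f a v) M)
    as [l [Hl1 Hl2]].
  - exists a; lra.
  - exact HM.
  - apply Hnear; lra.
  - intros x0 Hx0. apply (filter_imp (fun x => x0 <= x < t)); [| apply Hnear; lra].
    intros x Hx. split; [lra |].
    assert (E : RInt f a x0 + RInt f x0 x = RInt f a x) by (apply (RInt_Chasles f); apply Hex; lra).
    rewrite <- E.
    assert (0 <= RInt f x0 x) by (apply RInt_ge_0; [lra | apply Hex; lra | intros; apply Hpos; lra]).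
    lra.
  - exists l. split; auto. apply is_RInt_gen_from_point; auto.
    apply (@filter_filter _ _ (at_left_proper_filter t)).
    apply (filter_imp (fun x => a <= x < t)); [intros; apply Hex; lra | apply Hnear; lra].
Qed.

Lemma improper_at_zero (f : R -> R) b M : 0 < b ->
  (forall x z, 0 < x -> 0 < z -> ex_RInt f x z) -> (forall x, 0 < x -> 0 <= f x) ->
  (forall u, 0 < u <= b -> RInt f u b <= M) ->
  exists l, is_RInt_gen f (at_right 0) (at_point b) l /\ forall u, 0 < u <= b -> RInt f u b <= l.
Proof.
  intros Hb Hex Hpos HM.
  assert (Hnear : forall x0, 0 < x0 -> at_right 0 (fun x => 0 < x <= x0)).
  { intros x0 Hx0. exists (mkposreal x0 Hx0). intros x Hx Hx0'.
    change (Rabs (x - 0) < x0) in Hx. rewrite Rabs_right in Hx by lra. lra. }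
  destruct (monotone_limit (at_right 0) (fun u => 0 < u <= b) (fun u => RInt f u b) M)
    as [l [Hl1 Hl2]].
  - exists b; lra.
  - exact HM.
  - apply Hnear; lra.
  - intros x0 Hx0. apply (filter_imp (fun x => 0 < x <= x0)); [| apply Hnear; lra].
    intros x Hx. split; [lra |].
    assert (E : RInt f x x0 + RInt f x0 b = RInt f x b) by (apply (RInt_Chasles f); apply Hex; lra).
    rewrite <- E.
    assert (0 <= RInt f x x0) by (apply RInt_ge_0; [lra | apply Hex; lra | intros; apply Hpos; lra]).
    lra.
  - exists l. split; auto. apply is_RInt_gen_to_point; auto.
    apply (@filter_filter _ _ (at_right_proper_filter 0)).
    apply (filter_imp (fun x => 0 < x <= b)); [intros; apply Hex; lra | apply Hnear; lra].
Qed.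

(** * The Gamma function on (1, 2) *)

Lemma RInt_const_R a b k : RInt (fun _ => k) a b = k * (b - a).
Proof. rewrite RInt_const. unfold scal; simpl; unfold mult; simpl. ring. Qed.

(* Gamma(1+c) is the integral of s^c e^-s over (0, oo). *)
Definition gamma_integrand (c x : R) : R := Rpower x c * exp (- x).

Lemma gamma_integrand_pos c x : 0 < gamma_integrand c x.
Proof. apply Rmult_lt_0_compat; [apply Rpower_pos | apply exp_pos]. Qed.

Lemma gamma_integrand_cont c x : 0 < x -> continuous (gamma_integrand c) x.
Proof.
  intros Hx. apply (ex_derive_continuous (K := R_AbsRing) (V := R_NormedModule)).
  apply (ex_derive_mult (fun u => Rpower u c) (fun u => exp (- u))).
  - exists (c * Rpower x (c - 1)). apply is_derive_Reals, derivable_pt_lim_power; auto.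
  - auto_derive. auto.
Qed.

Lemma gamma_integrand_ex c u v : 0 < u -> 0 < v -> ex_RInt (gamma_integrand c) u v.
Proof.
  intros. apply (ex_RInt_continuous (V := R_CompleteNormedModule)). intros z Hz.
  apply gamma_integrand_cont. pose proof (Rmin_pos u v H H0). lra.
Qed.

Lemma gamma_integrand_le_1 c x : 0 < c -> 0 < x <= 1 -> gamma_integrand c x <= 1.
Proof.
  intros Hc Hx. unfold gamma_integrand.
  assert (Rpower x c <= 1) by (rewrite <- (Rpower_1_base c); apply Rle_Rpower_l; lra).
  assert (exp (- x) <= 1) by (rewrite <- exp_0; apply exp_le_mono; lra).
  pose proof (Rpower_pos x c). pose proof (exp_pos (- x)). nra.
Qed.

Lemma gamma_integrand_le_exp c x : 0 < c < 1 -> 1 <= x ->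
  gamma_integrand c x <= 2 * exp (- (x / 2)).
Proof.
  intros Hc Hx. unfold gamma_integrand.
  assert (Rpower x c <= x) by (rewrite <- (Rpower_1 x) at 2 by lra; apply Rle_Rpower; lra).
  pose proof (exp_ineq1_le (x / 2)). pose proof (exp_mul_opp (x / 2)).
  assert (E : exp (- x) = exp (- (x / 2)) * exp (- (x / 2))) by (rewrite <- exp_plus; f_equal; field).
  pose proof (exp_pos (- (x / 2))). pose proof (exp_pos (- x)).
  assert (Rpower x c * exp (- x) <= x * exp (- x)) by (apply Rmult_le_compat_r; lra).
  rewrite E in *. nra.
Qed.

Lemma RInt_exp_half v : 1 <= v -> RInt (fun x => 2 * exp (- (x / 2))) 1 v <= 4.
Proof.
  intros Hv. set (F := fun x => - 4 * exp (- (x / 2))).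
  assert (H : is_RInt (fun x => 2 * exp (- (x / 2))) 1 v (F v - F 1)).
  { apply (is_RInt_derive (V := R_CompleteNormedModule) F).
    - intros x _. unfold F. auto_derive; auto. unfold Rdiv; field.
    - intros x _. apply continuity_pt_filterlim, derivable_continuous_pt. reg. }
  rewrite (is_RInt_unique _ _ _ _ H). unfold F.
  pose proof (exp_pos (- (v / 2))).
  assert (exp (- (1 / 2)) <= 1)
    by (apply Rle_trans with (exp 0); [apply exp_le_mono; lra | rewrite exp_0; lra]).
  lra.
Qed.

Lemma Gamma_exists c : 0 < c < 1 ->
  is_RInt_gen (gamma_integrand c) (at_right 0) (Rbar_locally p_infty) (Gamma (1 + c)).
Proof.
  intros Hc.
  destruct (improper_at_zero (gamma_integrand c) 1 1) as [l1 [H1 _]].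
  - lra.
  - intros; apply gamma_integrand_ex; auto.
  - intros; left; apply gamma_integrand_pos.
  - intros u Hu. apply Rle_trans with (RInt (fun _ => 1) u 1).
    + apply RInt_le; [lra | apply gamma_integrand_ex; lra | apply ex_RInt_const |].
      intros x Hx; apply gamma_integrand_le_1; lra.
    + rewrite RInt_const_R. lra.
  - destruct (improper_at_infty (gamma_integrand c) 1 4) as [l2 [H2 _]].
    + intros; apply gamma_integrand_ex; lra.
    + intros; left; apply gamma_integrand_pos.
    + intros v Hv. apply Rle_trans with (RInt (fun x => 2 * exp (- (x / 2))) 1 v);
        [| apply RInt_exp_half; auto].
      apply RInt_le; auto; [apply gamma_integrand_ex; lra | |].
      * apply (ex_RInt_continuous (V := R_CompleteNormedModule)). intros z _.
        apply continuity_pt_filterlim, derivable_continuous_pt. reg.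
      * intros x Hx; apply gamma_integrand_le_exp; lra.
    + pose proof (is_RInt_gen_Chasles (gamma_integrand c) 1 l1 l2 H1 H2) as H.
      unfold Gamma. replace (1 + c - 1) with c by ring.
      rewrite (is_RInt_gen_unique (fun s => Rpower s c * exp (- s)) (plus l1 l2)); exact H.
Qed.

Lemma is_RInt_gen_approx f l : is_RInt_gen f (at_right 0) (Rbar_locally p_infty) l ->
  forall eps, 0 < eps -> exists e0, 0 < e0 /\ exists Y, forall u v, 0 < u < e0 -> Y < v ->
    exists I, is_RInt f u v I /\ Rabs (I - l) < eps.
Proof.
  intros H eps He.
  specialize (H _ (locally_ball l (mkposreal eps He))).
  destruct H as [Q R [d Hd] [Y HY] HQR].
  exists d. split; [apply cond_pos |]. exists Y. intros u v Hu Hv.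
  destruct (HQR u v) as [I [HI HIb]]; [| apply HY; auto | exists I; auto].
  apply Hd; [| lra]. change (Rabs (u - 0) < d). rewrite Rabs_right; lra.
Qed.

Lemma gamma_RInt_mono c u' u v v' : 0 < u' -> u' <= u -> u <= v -> v <= v' ->
  RInt (gamma_integrand c) u v <= RInt (gamma_integrand c) u' v'.
Proof.
  intros.
  set (g := gamma_integrand c).
  assert (E1 : RInt g u' u + RInt g u v' = RInt g u' v')
    by (apply (RInt_Chasles g); apply gamma_integrand_ex; lra).
  assert (E2 : RInt g u v + RInt g v v' = RInt g u v')
    by (apply (RInt_Chasles g); apply gamma_integrand_ex; lra).
  assert (0 <= RInt g u' u)
    by (apply RInt_ge_0; [lra | apply gamma_integrand_ex; lra | intros; left; apply gamma_integrand_pos]).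
  assert (0 <= RInt g v v')
    by (apply RInt_ge_0; [lra | apply gamma_integrand_ex; lra | intros; left; apply gamma_integrand_pos]).
  lra.
Qed.

Lemma Gamma_le c u v : 0 < c < 1 -> 0 < u -> u <= v ->
  RInt (gamma_integrand c) u v <= Gamma (1 + c).
Proof.
  intros Hc Hu Huv. apply le_epsilon. intros eps He.
  destruct (is_RInt_gen_approx _ _ (Gamma_exists c Hc) eps He) as [e0 [He0 [Y HY]]].
  pose proof (Rmin_pos u e0 Hu He0). pose proof (Rmin_l u e0). pose proof (Rmin_r u e0).
  pose proof (Rmax_l v Y). pose proof (Rmax_r v Y).
  destruct (HY (Rmin u e0 / 2) (Rmax v Y + 1)) as [I [HI HIl]]; [lra | lra |].
  pose proof (gamma_RInt_mono c (Rmin u e0 / 2) u v (Rmax v Y + 1)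
                ltac:(lra) ltac:(lra) Huv ltac:(lra)) as Hm.
  rewrite (is_RInt_unique _ _ _ _ HI) in Hm.
  apply Rabs_lt_between in HIl. lra.
Qed.

Lemma Gamma_approx c : 0 < c < 1 -> forall eta, 0 < eta -> exists e0, 0 < e0 /\ exists Y,
  forall u v, 0 < u < e0 -> Y < v -> Gamma (1 + c) - eta <= RInt (gamma_integrand c) u v.
Proof.
  intros Hc eta He.
  destruct (is_RInt_gen_approx _ _ (Gamma_exists c Hc) eta He) as [e0 [He0 [Y HY]]].
  exists e0; split; auto. exists Y. intros u v Hu Hv.
  destruct (HY u v Hu Hv) as [I [HI HIl]]. rewrite (is_RInt_unique _ _ _ _ HI).
  apply Rabs_lt_between in HIl. lra.
Qed.

Lemma Gamma_pos c : 0 < c < 1 -> 0 < Gamma (1 + c).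
Proof.
  intros Hc. apply Rlt_le_trans with (RInt (gamma_integrand c) 1 2); [| apply Gamma_le; lra].
  apply Rlt_le_trans with (RInt (fun _ => exp (-2)) 1 2).
  - rewrite RInt_const_R. pose proof (exp_pos (-2)). lra.
  - apply RInt_le; [lra | apply ex_RInt_const | apply gamma_integrand_ex; lra |].
    intros x Hx. unfold gamma_integrand.
    assert (1 <= Rpower x c) by (rewrite <- (Rpower_1_base c); apply Rle_Rpower_l; lra).
    assert (exp (-2) <= exp (- x)) by (apply exp_le_mono; lra).
    pose proof (exp_pos (-2)). nra.
Qed.

(** * Generating functions with damping factor e^-(kd) *)

Lemma exp_neg_ge x : 1 - x <= exp (- x).
Proof. pose proof (exp_ineq1_le (- x)). lra. Qed.

Lemma exp_small x : 0 <= x <= 1 / 2 -> exp x <= 1 + 2 * x.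
Proof.
  intros Hx. pose proof (exp_neg_ge x). pose proof (exp_mul_opp x). pose proof (exp_pos x). nra.
Qed.

Definition damp (d : R) (k : nat) : R := exp (- (INR k * d)).

Lemma damp_add d a b : damp d (a + b) = damp d a * damp d b.
Proof. unfold damp. rewrite <- exp_plus, plus_INR. f_equal. ring. Qed.

Lemma damp_pos d k : 0 < damp d k.
Proof. apply exp_pos. Qed.

Lemma damp_le_1 d k : 0 <= d -> damp d k <= 1.
Proof.
  intros. unfold damp. rewrite <- exp_0. apply exp_le_mono.
  pose proof (pos_INR k). nra.
Qed.

Lemma damp_1 d : damp d 1 = exp (- d).
Proof. unfold damp. simpl. f_equal. ring. Qed.

Lemma one_sub_damp_le d : 1 - damp d 1 <= d.
Proof. rewrite damp_1. pose proof (exp_neg_ge d). lra. Qed.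

Lemma one_sub_damp_ge d : d * exp (- d) <= 1 - damp d 1.
Proof.
  rewrite damp_1. pose proof (exp_ineq1_le d). pose proof (exp_mul_opp d).
  pose proof (exp_pos (- d)). nra.
Qed.

Lemma damp_geometric d N :
  sum_lt (fun j => damp d (S (S j))) N * (1 - damp d 1) = damp d 2 - damp d (S (S N)).
Proof.
  induction N; simpl sum_lt; [simpl; ring |].
  rewrite Rmult_plus_distr_r, IHN.
  replace (S (S (S N))) with (1 + S (S N))%nat by lia. rewrite damp_add. ring.
Qed.

Definition weight_gen (c d : R) (M : nat) : R :=
  sum_lt (fun p => bw c (S p) * damp d (S p)) M.
Definition kernel_gen (A B d : R) (N : nat) : R :=
  sum_lt (fun j => kernel A B (S j) * damp d (S (S j))) N.
Definition riemann_sum (c d : R) (M : nat) : R :=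
  sum_lt (fun p => gamma_integrand c (INR (S p) * d)) M.

Lemma weight_gen_nonneg c d M : 0 < c -> 0 <= weight_gen c d M.
Proof.
  intros. apply sum_lt_nonneg. intros.
  apply Rmult_le_pos; [apply bw_nonneg; auto | left; apply damp_pos].
Qed.

Lemma weight_gen_mono c d M M' : 0 < c -> (M <= M')%nat -> weight_gen c d M <= weight_gen c d M'.
Proof.
  intros. apply sum_lt_mono; auto. intros.
  apply Rmult_le_pos; [apply bw_nonneg; auto | left; apply damp_pos].
Qed.

Lemma kernel_gen_cauchy A B d N :
  kernel_gen A B d N = sum_lt (fun q => bw B (S q) * damp d (S q) * weight_gen A d (N - q)) N.
Proof.
  set (F := fun q p => bw B (S q) * damp d (S q) * (bw A (S p) * damp d (S p))).
  unfold kernel_gen, weight_gen.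
  rewrite (sum_lt_ext _ (fun j => sum_lt (fun q => F q (j - q)%nat) (S j))).
  - rewrite (sum_lt_triangle F N). apply sum_lt_ext. intros q Hq.
    rewrite <- sum_lt_scal. reflexivity.
  - intros j Hj. unfold kernel, F. rewrite Rmult_comm, <- sum_lt_scal.
    apply sum_lt_ext. intros q Hq.
    replace (S j - q)%nat with (S (j - q)) by lia.
    replace (S (S j)) with (S q + S (j - q))%nat by lia. rewrite damp_add. ring.
Qed.

Lemma kernel_gen_upper A B d N : 0 < A -> 0 < B ->
  kernel_gen A B d N <= weight_gen B d N * weight_gen A d N.
Proof.
  intros HA HB. rewrite kernel_gen_cauchy.
  change (weight_gen B d N) with (sum_lt (fun q => bw B (S q) * damp d (S q)) N).
  rewrite Rmult_comm, <- sum_lt_scal.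
  apply sum_lt_le. intros q Hq. rewrite Rmult_comm.
  assert (0 <= bw B (S q) * damp d (S q))
    by (apply Rmult_le_pos; [apply bw_nonneg; auto | left; apply damp_pos]).
  pose proof (weight_gen_mono A d (N - q) N HA ltac:(lia)). nra.
Qed.

Lemma kernel_gen_lower A B d M : 0 < A -> 0 < B ->
  weight_gen B d M * weight_gen A d M <= kernel_gen A B d (M + M).
Proof.
  intros HA HB. rewrite kernel_gen_cauchy.
  apply Rle_trans with (sum_lt (fun q => bw B (S q) * damp d (S q) * weight_gen A d (M + M - q)) M).
  - change (weight_gen B d M) with (sum_lt (fun q => bw B (S q) * damp d (S q)) M).
    rewrite Rmult_comm, <- sum_lt_scal.
    apply sum_lt_le. intros q Hq. rewrite Rmult_comm.
    assert (0 <= bw B (S q) * damp d (S q))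
      by (apply Rmult_le_pos; [apply bw_nonneg; auto | left; apply damp_pos]).
    pose proof (weight_gen_mono A d M (M + M - q) HA ltac:(lia)). nra.
  - apply sum_lt_mono; [lia |]. intros.
    apply Rmult_le_pos; [apply Rmult_le_pos; [apply bw_nonneg; auto | left; apply damp_pos] |].
    apply weight_gen_nonneg; auto.
Qed.

Lemma weight_gen_abel c d M : weight_gen c d M =
  (1 - damp d 1) * sum_lt (fun p => ipow c (S p) * damp d (S p)) M + ipow c M * damp d (S M).
Proof.
  induction M.
  - unfold weight_gen. simpl. rewrite ipow_0. ring.
  - unfold weight_gen in *. simpl sum_lt. rewrite IHM, bw_S.
    replace (S (S M)) with (1 + S M)%nat by lia. rewrite damp_add. ring.
Qed.

Lemma sum_ipow_damp c d M : 0 < d ->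
  sum_lt (fun p => ipow c (S p) * damp d (S p)) M = riemann_sum c d M / Rpower d c.
Proof.
  intros Hd. unfold riemann_sum, Rdiv. rewrite Rmult_comm, <- sum_lt_scal.
  apply sum_lt_ext. intros p _.
  unfold ipow, gamma_integrand, damp. rewrite rpow_pos by (apply INR_pos1; lia).
  rewrite <- Rpower_mult_distr by (try (apply INR_pos1; lia); lra).
  pose proof (Rpower_pos d c). field. lra.
Qed.

Lemma gamma_integrand_on_cell c d p x : 0 < c < 1 -> 0 < d ->
  INR (S p) * d <= x <= INR (S (S p)) * d ->
  exp (- d) * gamma_integrand c (INR (S p) * d) <= gamma_integrand c x /\
  gamma_integrand c x <= exp d * gamma_integrand c (INR (S (S p)) * d).
Proof.
  intros Hc Hd Hx. rewrite S_INR with (n := S p) in *. set (a := INR (S p) * d) in *.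
  assert (Ha : 0 < a) by (unfold a; apply Rmult_lt_0_compat; [apply INR_pos1; lia | lra]).
  replace ((INR (S p) + 1) * d) with (a + d) in * by (unfold a; ring).
  unfold gamma_integrand. split.
  - assert (Rpower a c <= Rpower x c) by (apply Rle_Rpower_l; lra).
    assert (exp (- d) * exp (- a) <= exp (- x)) by (rewrite <- exp_plus; apply exp_le_mono; lra).
    pose proof (Rpower_pos a c). pose proof (exp_pos (- d)). pose proof (exp_pos (- a)). pose proof (exp_pos (- x)). nra.
  - assert (Rpower x c <= Rpower (a + d) c) by (apply Rle_Rpower_l; lra).
    assert (exp (- x) <= exp d * exp (- (a + d))) by (rewrite <- exp_plus; apply exp_le_mono; lra).
    pose proof (Rpower_pos x c). pose proof (exp_pos d). pose proof (exp_pos (- (a + d))). pose proof (exp_pos (- x)). nra.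
Qed.

Lemma cell_left_pos p d : 0 < d -> 0 < INR (S p) * d.
Proof. intros. apply Rmult_lt_0_compat; auto. apply INR_pos1; lia. Qed.

Lemma cell_width p d : INR (S (S p)) * d - INR (S p) * d = d.
Proof. rewrite (S_INR (S p)). ring. Qed.

Lemma RInt_cell_lower c d p : 0 < c < 1 -> 0 < d ->
  d * gamma_integrand c (INR (S p) * d)
  <= exp d * RInt (gamma_integrand c) (INR (S p) * d) (INR (S (S p)) * d).
Proof.
  intros Hc Hd.
  assert (H : RInt (fun _ => exp (- d) * gamma_integrand c (INR (S p) * d)) (INR (S p) * d) (INR (S (S p)) * d)
              <= RInt (gamma_integrand c) (INR (S p) * d) (INR (S (S p)) * d)).
  { apply RInt_le; [pose proof (cell_width p d); lra | apply ex_RInt_const |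
      apply gamma_integrand_ex; apply cell_left_pos; auto |].
    intros x Hx. apply (gamma_integrand_on_cell c d p x); auto; lra. }
  rewrite RInt_const_R, cell_width in H.
  apply Rmult_le_compat_l with (r := exp d) in H; [| left; apply exp_pos].
  replace (exp d * (exp (- d) * gamma_integrand c (INR (S p) * d) * d))
    with (d * gamma_integrand c (INR (S p) * d) * (exp d * exp (- d))) in H by ring.
  rewrite exp_mul_opp, Rmult_1_r in H. exact H.
Qed.

Lemma RInt_cell_upper c d p : 0 < c < 1 -> 0 < d ->
  exp (- d) * RInt (gamma_integrand c) (INR (S p) * d) (INR (S (S p)) * d)
  <= d * gamma_integrand c (INR (S (S p)) * d).
Proof.
  intros Hc Hd.
  assert (H : RInt (gamma_integrand c) (INR (S p) * d) (INR (S (S p)) * d)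
              <= RInt (fun _ => exp d * gamma_integrand c (INR (S (S p)) * d)) (INR (S p) * d) (INR (S (S p)) * d)).
  { apply RInt_le; [pose proof (cell_width p d); lra |
      apply gamma_integrand_ex; apply cell_left_pos; auto | apply ex_RInt_const |].
    intros x Hx. apply (gamma_integrand_on_cell c d p x); auto; lra. }
  rewrite RInt_const_R, cell_width in H.
  apply Rmult_le_compat_l with (r := exp (- d)) in H; [| left; apply exp_pos].
  replace (exp (- d) * (exp d * gamma_integrand c (INR (S (S p)) * d) * d))
    with (d * gamma_integrand c (INR (S (S p)) * d) * (exp d * exp (- d))) in H by ring.
  rewrite exp_mul_opp, Rmult_1_r in H. exact H.
Qed.

Lemma RInt_cells c d M : 0 < d ->
  sum_lt (fun p => RInt (gamma_integrand c) (INR (S p) * d) (INR (S (S p)) * d)) M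
  = RInt (gamma_integrand c) d (INR (S M) * d).
Proof.
  intros Hd. induction M.
  - simpl. replace (1 * d) with d by ring. rewrite RInt_point. reflexivity.
  - rewrite sum_lt_S, IHM.
    apply (RInt_Chasles (V := R_CompleteNormedModule) (gamma_integrand c));
      apply gamma_integrand_ex; try apply cell_left_pos; auto.
Qed.

Lemma riemann_sum_upper c d M : 0 < c < 1 -> 0 < d ->
  d * riemann_sum c d M <= exp d * Gamma (1 + c).
Proof.
  intros Hc Hd. unfold riemann_sum. rewrite <- sum_lt_scal.
  apply Rle_trans with (exp d * RInt (gamma_integrand c) d (INR (S M) * d)).
  - rewrite <- RInt_cells by auto. rewrite <- sum_lt_scal.
    apply sum_lt_le. intros p _. apply RInt_cell_lower; auto.
  - apply Rmult_le_compat_l; [left; apply exp_pos |]. apply Gamma_le; auto.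
    rewrite S_INR. pose proof (pos_INR M). nra.
Qed.

Lemma riemann_sum_lower c d M : 0 < c < 1 -> 0 < d ->
  exp (- d) * RInt (gamma_integrand c) d (INR (S M) * d) <= d * riemann_sum c d (S M).
Proof.
  intros Hc Hd. unfold riemann_sum. replace (S M) with (1 + M)%nat at 2 by lia.
  rewrite sum_lt_app, Rmult_plus_distr_l. rewrite <- RInt_cells by auto.
  rewrite <- !sum_lt_scal.
  assert (0 <= sum_lt (fun i => d * gamma_integrand c (INR (S i) * d)) 1)
    by (apply sum_lt_nonneg; intros; apply Rmult_le_pos; [lra | left; apply gamma_integrand_pos]).
  assert (sum_lt (fun i => exp (- d) * RInt (gamma_integrand c) (INR (S i) * d) (INR (S (S i)) * d)) M
          <= sum_lt (fun i => d * gamma_integrand c (INR (S (1 + i)) * d)) M)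
    by (apply sum_lt_le; intros; apply RInt_cell_upper; auto).
  lra.
Qed.

Lemma le_of_le_plus_small a b K d0 :
  0 < d0 -> (forall d, 0 < d <= d0 -> a <= b + d * K) -> a <= b.
Proof.
  intros Hd0 H. destruct (Rle_lt_dec a b) as [| Hab]; auto. exfalso.
  set (d := Rmin d0 ((a - b) / (2 * (Rabs K + 1)))).
  assert (HK : 0 < 2 * (Rabs K + 1)) by (pose proof (Rabs_pos K); lra).
  assert (Hq : 0 < (a - b) / (2 * (Rabs K + 1))) by (apply Rdiv_lt_0_compat; lra).
  assert (Hd : 0 < d) by (apply Rmin_pos; auto).
  assert (Hd1 : d <= d0) by apply Rmin_l.
  assert (Hd2 : d <= (a - b) / (2 * (Rabs K + 1))) by apply Rmin_r.
  specialize (H d (conj Hd Hd1)).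
  assert (d * K <= d * Rabs K) by (apply Rmult_le_compat_l; [lra | apply Rle_abs]).
  assert (d * (2 * (Rabs K + 1)) <= a - b).
  { apply Rmult_le_reg_r with (/ (2 * (Rabs K + 1))); [apply Rinv_0_lt_compat; auto |].
    rewrite Rmult_assoc, Rinv_r by lra. unfold Rdiv in Hd2. lra. }
  pose proof (Rabs_pos K). nra.
Qed.

(* e^-x <= 1/x <= d for x >= 1/d. *)
Lemma exp_neg_le_small x d : 0 < d -> 1 / d <= x -> exp (- x) <= d.
Proof.
  intros Hd Hx. pose proof (exp_ineq1_le x). pose proof (exp_mul_opp x).
  pose proof (exp_pos (- x)).
  assert (Hd1 : d * (1 / d) = 1) by (field; lra).
  assert (exp (- x) * (d * (1 / d)) <= exp (- x) * (d * exp x))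
    by (apply Rmult_le_compat_l; [lra | apply Rmult_le_compat_l; lra]).
  nra.
Qed.

Lemma gamma_integrand_small_tail c x d : 0 < c < 1 -> 0 < d <= 1 / 2 -> 4 / d <= x ->
  gamma_integrand c x <= d.
Proof.
  intros Hc Hd Hx.
  assert (H2 : 2 / d <= x / 2) by (unfold Rdiv in *; lra).
  assert (H4 : 8 <= x) by (apply Rle_trans with (4 / d); auto;
    apply Rmult_le_reg_r with d; [lra |]; unfold Rdiv; rewrite Rmult_assoc, Rinv_l by lra; lra).
  pose proof (gamma_integrand_le_exp c x Hc ltac:(lra)).
  assert (exp (- (x / 2)) <= d / 2) by (apply exp_neg_le_small; [lra | replace (1 / (d / 2)) with (2 / d) by (field; lra); lra]).
  lra.
Qed.

Lemma weight_gen_upper c d N : 0 < c < 1 -> 0 < d <= 1 / 2 -> (1 <= N)%nat ->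
  4 / d <= INR N * d -> weight_gen c d N * Rpower d c <= exp d * Gamma (1 + c) + d.
Proof.
  intros Hc Hd HN Hx.
  rewrite weight_gen_abel, sum_ipow_damp by lra.
  pose proof (Rpower_pos d c).
  replace (((1 - damp d 1) * (riemann_sum c d N / Rpower d c) + ipow c N * damp d (S N)) * Rpower d c)
    with ((1 - damp d 1) * riemann_sum c d N + ipow c N * Rpower d c * damp d (S N)) by (field; lra).
  assert (S0 : 0 <= riemann_sum c d N)
    by (apply sum_lt_nonneg; intros; left; apply gamma_integrand_pos).
  pose proof (one_sub_damp_le d). pose proof (riemann_sum_upper c d N Hc ltac:(lra)).
  assert (T1 : (1 - damp d 1) * riemann_sum c d N <= exp d * Gamma (1 + c)) by nra.
  assert (T2 : ipow c N * Rpower d c * damp d (S N) <= gamma_integrand c (INR N * d)).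
  { unfold ipow, gamma_integrand. rewrite rpow_pos by (apply INR_pos1; auto).
    rewrite Rpower_mult_distr by (try (apply INR_pos1; auto); lra).
    assert (damp d (S N) <= exp (- (INR N * d))) by (unfold damp; apply exp_le_mono; rewrite S_INR; lra).
    pose proof (Rpower_pos (INR N * d) c). nra. }
  pose proof (gamma_integrand_small_tail c (INR N * d) d Hc Hd Hx). lra.
Qed.

Lemma weight_gen_lower c d n : 0 < c < 1 -> 0 < d ->
  exp (- d) * exp (- d) * RInt (gamma_integrand c) d (INR (S n) * d) <= weight_gen c d (S n) * Rpower d c.
Proof.
  intros Hc Hd.
  rewrite weight_gen_abel, sum_ipow_damp by lra.
  pose proof (Rpower_pos d c).
  replace (((1 - damp d 1) * (riemann_sum c d (S n) / Rpower d c) + ipow c (S n) * damp d (S (S n))) * Rpower d c)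
    with ((1 - damp d 1) * riemann_sum c d (S n) + ipow c (S n) * Rpower d c * damp d (S (S n)))
    by (field; lra).
  assert (0 <= ipow c (S n) * Rpower d c * damp d (S (S n)))
    by (apply Rmult_le_pos; [apply Rmult_le_pos; [apply rpow_nonneg | lra] | left; apply damp_pos]).
  assert (S0 : 0 <= riemann_sum c d (S n))
    by (apply sum_lt_nonneg; intros; left; apply gamma_integrand_pos).
  pose proof (one_sub_damp_ge d). pose proof (riemann_sum_lower c d n Hc Hd).
  pose proof (exp_pos (- d)).
  assert (d * exp (- d) * riemann_sum c d (S n) <= (1 - damp d 1) * riemann_sum c d (S n))
    by (apply Rmult_le_compat_r; auto).
  assert (exp (- d) * (exp (- d) * RInt (gamma_integrand c) d (INR (S n) * d))
          <= exp (- d) * (d * riemann_sum c d (S n))) by (apply Rmult_le_compat_l; lra).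
  nra.
Qed.

Lemma Rpower_split_d d A B : 0 < d -> A + B = 1 -> Rpower d A * Rpower d B = d.
Proof. intros Hd HAB. rewrite <- Rpower_plus, HAB. apply Rpower_1; auto. Qed.

(** * The limit of the kernel is Gamma(1+A) Gamma(1+B) *)

Section KernelLimit.
Variables A B : R.
Hypothesis HA : 0 < A < 1.
Hypothesis HB : 0 < B < 1.
Hypothesis HAB : A + B = 1.

Lemma weight_product_upper d N : 0 < d <= 1 / 2 -> (1 <= N)%nat -> 4 / d <= INR N * d ->
  d * (weight_gen B d N * weight_gen A d N) <=
  ((1 + 2 * d) * Gamma (1 + B) + d) * ((1 + 2 * d) * Gamma (1 + A) + d).
Proof.
  intros Hd HN Hx.
  pose proof (weight_gen_upper A d N HA Hd HN Hx) as WA.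
  pose proof (weight_gen_upper B d N HB Hd HN Hx) as WB.
  pose proof (weight_gen_nonneg A d N ltac:(lra)). pose proof (weight_gen_nonneg B d N ltac:(lra)).
  pose proof (Gamma_pos A HA). pose proof (Gamma_pos B HB).
  pose proof (Rpower_pos d A). pose proof (Rpower_pos d B). pose proof (exp_pos d).
  assert (Hexp : exp d <= 1 + 2 * d) by (apply exp_small; lra).
  rewrite <- (Rpower_split_d d A B) at 1 by lra.
  replace (Rpower d A * Rpower d B * (weight_gen B d N * weight_gen A d N))
    with ((weight_gen B d N * Rpower d B) * (weight_gen A d N * Rpower d A)) by ring.
  apply Rmult_le_compat; try (apply Rmult_le_pos; lra); nra.
Qed.

Lemma kernel_lower_bound_damped L d : 0 <= L -> (forall j, (1 <= j)%nat -> L <= kernel A B j) ->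
  0 < d <= 1 / 2 ->
  L * (1 - 3 * d) <= ((1 + 2 * d) * Gamma (1 + B) + d) * ((1 + 2 * d) * Gamma (1 + A) + d).
Proof.
  intros HL HK Hd.
  destruct (INR_archimed d (4 / d) ltac:(lra)) as [N HN].
  assert (HN1 : (1 <= N)%nat).
  { destruct N; [| lia]. simpl in HN. assert (0 < 4 / d) by (apply Rdiv_lt_0_compat; lra). lra. }
  set (E := sum_lt (fun j => damp d (S (S j))) N).
  assert (HE0 : 0 <= E) by (apply sum_lt_nonneg; intros; left; apply damp_pos).
  assert (HLT : L * E <= kernel_gen A B d N).
  { unfold E, kernel_gen. rewrite <- sum_lt_scal. apply sum_lt_le. intros j Hj.
    pose proof (HK (S j) ltac:(lia)). pose proof (damp_pos d (S (S j))). nra. }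
  pose proof (kernel_gen_upper A B d N ltac:(lra) ltac:(lra)) as HTW.
  pose proof (weight_product_upper d N Hd HN1 ltac:(lra)) as HW.
  pose proof (damp_geometric d N) as HG. fold E in HG.
  pose proof (one_sub_damp_le d). pose proof (one_sub_damp_ge d). pose proof (exp_pos (- d)).
  assert (HEN : damp d (S (S N)) <= d).
  { apply Rle_trans with (exp (- (INR N * d))).
    - unfold damp. apply exp_le_mono. rewrite !S_INR; lra.
    - apply exp_neg_le_small; [lra |].
      assert (1 / d <= 4 / d)
        by (unfold Rdiv; apply Rmult_le_compat_r; [left; apply Rinv_0_lt_compat |]; lra).
      lra. }
  assert (HE2 : 1 - 2 * d <= damp d 2)
    by (unfold damp; simpl; replace ((1 + 1) * d) with (2 * d) by ring; apply exp_neg_ge).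
  assert (L * (1 - 3 * d) <= L * (E * (1 - damp d 1))) by (apply Rmult_le_compat_l; lra).
  assert (L * E * (1 - damp d 1) <= kernel_gen A B d N * d) by (apply Rmult_le_compat; nra).
  assert (kernel_gen A B d N * d <= d * (weight_gen B d N * weight_gen A d N)) by nra.
  nra.
Qed.

Lemma kernel_inf_le_Gamma L : 0 <= L -> (forall j, (1 <= j)%nat -> L <= kernel A B j) ->
  L <= Gamma (1 + A) * Gamma (1 + B).
Proof.
  intros HL HK.
  pose proof (Gamma_pos A HA). pose proof (Gamma_pos B HB).
  set (a := Gamma (1 + A)) in *. set (b := Gamma (1 + B)) in *.
  apply (le_of_le_plus_small _ _ (3 * L + (2 * a + 1) * b + (2 * b + 1) * a + (2 * a + 1) * (2 * b + 1)) (1 / 2));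
    [lra |].
  intros d Hd. pose proof (kernel_lower_bound_damped L d HL HK Hd) as Hdamped.
  fold a b in Hdamped.
  assert (d * d * ((2 * a + 1) * (2 * b + 1)) <= d * ((2 * a + 1) * (2 * b + 1)))
    by (apply Rmult_le_compat_r; nra).
  assert (((1 + 2 * d) * b + d) * ((1 + 2 * d) * a + d) =
          a * b + d * ((2 * a + 1) * b + (2 * b + 1) * a) + d * d * ((2 * a + 1) * (2 * b + 1)))
    by ring.
  replace (L * (1 - 3 * d)) with (L - 3 * (d * L)) in Hdamped by ring.
  lra.
Qed.

Lemma indicator_sum_le N J : sum_lt (fun j => if Nat.ltb j J then 1 else 0) N <= INR J.
Proof.
  assert (Hcount : forall M, sum_lt (fun j => if Nat.ltb j J then 1 else 0) M <= INR M).
  { induction M; [simpl; lra |]. rewrite sum_lt_S, S_INR. destruct (Nat.ltb M J); lra. }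
  induction N; [simpl; apply pos_INR |]. rewrite sum_lt_S.
  destruct (Nat.ltb N J) eqn:E; [| lra].
  apply Nat.ltb_lt in E. specialize (Hcount N).
  assert (INR N + 1 <= INR J) by (rewrite <- S_INR; apply le_INR; lia). lra.
Qed.

Lemma kernel_gen_tail_bound d N J L eps : 0 < d -> 0 <= L + eps ->
  (forall j, (J <= j)%nat -> kernel A B j <= L + eps) ->
  d * kernel_gen A B d N <= d * INR J + (L + eps) * exp d.
Proof.
  intros Hd HLe HJ.
  set (E := sum_lt (fun j => damp d (S (S j))) N).
  assert (HT : kernel_gen A B d N <= sum_lt (fun j => (if Nat.ltb j J then 1 else 0)) N + (L + eps) * E).
  { unfold E. rewrite <- sum_lt_scal, <- sum_lt_plus. apply sum_lt_le. intros j Hj.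
    pose proof (kernel_nonneg A B (S j) ltac:(lra) ltac:(lra)).
    pose proof (damp_pos d (S (S j))). pose proof (damp_le_1 d (S (S j)) ltac:(lra)).
    destruct (Nat.ltb j J) eqn:Ej.
    - pose proof (kernel_le_1 A B (S j) HA HB HAB ltac:(lia)).
      assert (0 <= (L + eps) * damp d (S (S j))) by (apply Rmult_le_pos; lra). nra.
    - apply Nat.ltb_ge in Ej. pose proof (HJ (S j) ltac:(lia)). nra. }
  pose proof (indicator_sum_le N J) as HI.
  assert (HE : d * E <= exp d).
  { pose proof (damp_geometric d N) as HG. fold E in HG.
    pose proof (one_sub_damp_ge d). pose proof (damp_le_1 d 2 ltac:(lra)).
    pose proof (damp_pos d (S (S N))).
    assert (HE0 : 0 <= E) by (apply sum_lt_nonneg; intros; left; apply damp_pos).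
    assert (E * (d * exp (- d)) <= 1)
      by (apply Rle_trans with (E * (1 - damp d 1)); [apply Rmult_le_compat_l | ]; lra).
    pose proof (exp_mul_opp d). pose proof (exp_pos d).
    assert (exp d * (E * (d * exp (- d))) <= exp d * 1) by (apply Rmult_le_compat_l; lra).
    nra. }
  assert ((L + eps) * (d * E) <= (L + eps) * exp d) by (apply Rmult_le_compat_l; lra).
  nra.
Qed.

Lemma weight_product_lower d n a' b' : 0 < d -> 0 <= a' -> 0 <= b' ->
  a' <= RInt (gamma_integrand A) d (INR (S n) * d) ->
  b' <= RInt (gamma_integrand B) d (INR (S n) * d) ->
  (exp (- d) * exp (- d)) * (exp (- d) * exp (- d)) * (a' * b') <= d * kernel_gen A B d (S n + S n).
Proof.
  intros Hd Ha' Hb' RA RB.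
  pose proof (weight_gen_lower A d n HA Hd) as WA. pose proof (weight_gen_lower B d n HB Hd) as WB.
  set (q := exp (- d) * exp (- d)) in *.
  assert (Hq0 : 0 < q) by (unfold q; pose proof (exp_pos (- d)); nra).
  assert (WA' : q * a' <= weight_gen A d (S n) * Rpower d A)
    by (apply Rle_trans with (q * RInt (gamma_integrand A) d (INR (S n) * d));
        [apply Rmult_le_compat_l | ]; lra).
  assert (WB' : q * b' <= weight_gen B d (S n) * Rpower d B)
    by (apply Rle_trans with (q * RInt (gamma_integrand B) d (INR (S n) * d));
        [apply Rmult_le_compat_l | ]; lra).
  pose proof (kernel_gen_lower A B d (S n) ltac:(lra) ltac:(lra)).
  replace (q * q * (a' * b')) with ((q * b') * (q * a')) by ring.
  apply Rle_trans with ((weight_gen B d (S n) * Rpower d B) * (weight_gen A d (S n) * Rpower d A)).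
  - apply Rmult_le_compat; try (apply Rmult_le_pos; lra); lra.
  - replace ((weight_gen B d (S n) * Rpower d B) * (weight_gen A d (S n) * Rpower d A))
      with (Rpower d A * Rpower d B * (weight_gen B d (S n) * weight_gen A d (S n))) by ring.
    rewrite (Rpower_split_d d A B) by lra.
    apply Rmult_le_compat_l; lra.
Qed.

Lemma Gamma_product_approx_le L eps eta : 0 <= L -> 0 < eps ->
  (exists J, forall j, (J <= j)%nat -> kernel A B j <= L + eps) ->
  0 < eta -> eta <= Gamma (1 + A) -> eta <= Gamma (1 + B) ->
  (Gamma (1 + A) - eta) * (Gamma (1 + B) - eta) <= L + eps.
Proof.
  intros HL Heps [J HJ] He HeA HeB.
  set (a := Gamma (1 + A)) in *. set (b := Gamma (1 + B)) in *.
  destruct (Gamma_approx A HA eta He) as [eA [HeA0 [YA HYA]]].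
  destruct (Gamma_approx B HB eta He) as [eB [HeB0 [YB HYB]]].
  fold a in HYA. fold b in HYB.
  set (PP := (a - eta) * (b - eta)).
  assert (HPP : 0 <= PP) by (unfold PP; apply Rmult_le_pos; lra).
  apply (le_of_le_plus_small _ _ (4 * PP + INR J + 2 * (L + eps)) (Rmin (1 / 2) (Rmin (eA / 2) (eB / 2)))).
  { apply Rmin_pos; [lra | apply Rmin_pos; lra]. }
  intros d Hd.
  pose proof (Rmin_l (1 / 2) (Rmin (eA / 2) (eB / 2))).
  pose proof (Rmin_r (1 / 2) (Rmin (eA / 2) (eB / 2))).
  pose proof (Rmin_l (eA / 2) (eB / 2)). pose proof (Rmin_r (eA / 2) (eB / 2)).
  destruct (INR_archimed d (Rmax YA YB) ltac:(lra)) as [n Hn].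
  pose proof (Rmax_l YA YB). pose proof (Rmax_r YA YB).
  assert (HM : Rmax YA YB < INR (S n) * d) by (rewrite S_INR; lra).
  pose proof (HYA d (INR (S n) * d) ltac:(lra) ltac:(lra)) as RA.
  pose proof (HYB d (INR (S n) * d) ltac:(lra) ltac:(lra)) as RB.
  set (q := exp (- d) * exp (- d)).
  assert (Hq : 1 - 2 * d <= q) by (unfold q; pose proof (exp_neg_ge d); pose proof (exp_pos (- d)); nra).
  pose proof (weight_product_lower d n (a - eta) (b - eta) ltac:(lra) ltac:(lra) ltac:(lra) RA RB)
    as C1. fold q PP in C1.
  pose proof (kernel_gen_tail_bound d (S n + S n) J L eps ltac:(lra) ltac:(lra) HJ) as C2.
  assert (Hexp : exp d <= 1 + 2 * d) by (apply exp_small; lra).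
  assert (C3 : (1 - 4 * d) * PP <= q * q * PP) by (apply Rmult_le_compat_r; nra).
  assert ((L + eps) * exp d <= (L + eps) * (1 + 2 * d)) by (apply Rmult_le_compat_l; lra).
  nra.
Qed.

Lemma Gamma_le_kernel_limit L : 0 <= L ->
  (forall eps, 0 < eps -> exists J, forall j, (J <= j)%nat -> kernel A B j <= L + eps) ->
  Gamma (1 + A) * Gamma (1 + B) <= L.
Proof.
  intros HL HJ.
  pose proof (Gamma_pos A HA). pose proof (Gamma_pos B HB).
  apply (le_of_le_plus_small _ _ (Gamma (1 + A) + Gamma (1 + B)) (Rmin (Gamma (1 + A)) (Gamma (1 + B)))).
  { apply Rmin_pos; auto. }
  intros eta [He Heb]. pose proof (Rmin_l (Gamma (1 + A)) (Gamma (1 + B))).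
  pose proof (Rmin_r (Gamma (1 + A)) (Gamma (1 + B))).
  assert (Hle : (Gamma (1 + A) - eta) * (Gamma (1 + B) - eta) <= L).
  { apply le_epsilon. intros eps Heps.
    apply Gamma_product_approx_le; auto; lra. }
  nra.
Qed.

End KernelLimit.

(** * Estimates for a C^1 function on [0, T] *)

Lemma within_eps (D : R -> Prop) (f : R -> R) x0 l :
  filterlim f (within D (locally x0)) (locally l) ->
  forall eps, 0 < eps -> exists d, 0 < d /\
    forall z, Rabs (z - x0) < d -> D z -> Rabs (f z - l) < eps.
Proof.
  intros H eps He.
  destruct (H _ (locally_ball l (mkposreal eps He))) as [d Hd].
  exists d. split; [apply cond_pos |]. intros z Hz HDz. apply (Hd z Hz HDz).
Qed.

Lemma le_at_left_endpoint (f : R -> R) t M K d : 0 < d ->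
  (forall v, t - d < v < t -> f v <= M) ->
  (forall v, t - d < v < t -> f t <= f v + K * (t - v)) -> f t <= M.
Proof.
  intros Hd Hle Hlip. apply le_epsilon. intros eps He.
  set (r := Rmin d (eps / (Rabs K + 1)) / 2).
  assert (HK : 0 < Rabs K + 1) by (pose proof (Rabs_pos K); lra).
  assert (Hr0 : 0 < Rmin d (eps / (Rabs K + 1))) by (apply Rmin_pos; [lra | apply Rdiv_lt_0_compat; lra]).
  pose proof (Rmin_l d (eps / (Rabs K + 1))). pose proof (Rmin_r d (eps / (Rabs K + 1))).
  assert (Hr : 0 < r < d) by (unfold r; lra).
  specialize (Hle (t - r) ltac:(lra)). specialize (Hlip (t - r) ltac:(lra)).
  replace (t - (t - r)) with r in Hlip by ring.
  assert (K * r <= Rabs K * r) by (apply Rmult_le_compat_r; [lra | apply Rle_abs]).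
  assert ((Rabs K + 1) * r <= eps).
  { apply Rle_trans with ((Rabs K + 1) * (eps / (Rabs K + 1))).
    - apply Rmult_le_compat_l; unfold r; lra.
    - right. field. lra. }
  pose proof (Rabs_pos K). nra.
Qed.

Section C1Function.
Variables (T : R) (y y' : R -> R).
Hypothesis HT : 0 < T.
Hypothesis Hd : forall x, 0 <= x <= T ->
  filterlim (fun d => (y (x + d) - y x) / d)
    (within (fun d => d <> 0 /\ 0 <= x + d <= T) (locally 0)) (locally (y' x)).
Hypothesis Hc : forall x, 0 <= x <= T ->
  filterlim y' (within (fun z => 0 <= z <= T) (locally x)) (locally (y' x)).

Lemma y_local_lipschitz x : 0 <= x <= T -> exists d, 0 < d /\
  forall z, Rabs (z - x) < d -> 0 <= z <= T -> Rabs (y z - y x) <= (Rabs (y' x) + 1) * Rabs (z - x).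
Proof.
  intros Hx. destruct (within_eps _ _ _ _ (Hd x Hx) 1 ltac:(lra)) as [d [Hd0 Hdd]].
  exists d. split; auto. intros z Hz HzT.
  destruct (Req_dec z x) as [-> | Hne].
  - unfold Rminus. rewrite !Rplus_opp_r, Rabs_R0, Rmult_0_r. lra.
  - specialize (Hdd (z - x)). replace (z - x - 0) with (z - x) in Hdd by ring.
    replace (x + (z - x)) with z in Hdd by ring.
    assert (Hzx : z - x <> 0) by lra. specialize (Hdd Hz (conj Hzx HzT)).
    replace (y z - y x) with ((y z - y x) / (z - x) * (z - x)) by (field; lra).
    rewrite Rabs_mult. apply Rmult_le_compat_r; [apply Rabs_pos |].
    pose proof (Rabs_triang_inv ((y z - y x) / (z - x)) (y' x)). lra.
Qed.

Lemma y_deriv x : 0 < x < T -> is_derive y x (y' x).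
Proof.
  intros Hx. apply is_derive_Reals. intros eps He.
  destruct (within_eps _ _ _ _ (Hd x ltac:(lra)) eps He) as [d [Hd0 Hdd]].
  assert (Hm : 0 < Rmin d (Rmin x (T - x))) by (apply Rmin_pos; [lra | apply Rmin_pos; lra]).
  exists (mkposreal _ Hm). intros h Hh0 Hh. simpl in Hh.
  pose proof (Rmin_l d (Rmin x (T - x))). pose proof (Rmin_r d (Rmin x (T - x))).
  pose proof (Rmin_l x (T - x)). pose proof (Rmin_r x (T - x)).
  apply (Hdd h); [rewrite Rminus_0_r; lra |].
  split; auto. apply Rabs_lt_between in Hh. lra.
Qed.

Definition y'_ext (s : R) : R := y' (Rmax 0 s).

Lemma y'_ext_cont s : 0 <= s < T -> continuous y'_ext s.
Proof.
  intros Hs. apply filterlim_locally. intros eps.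
  destruct (within_eps _ _ _ _ (Hc s ltac:(lra)) eps (cond_pos eps)) as [d [Hd0 Hdd]].
  assert (Hm : 0 < Rmin d (T - s)) by (apply Rmin_pos; lra).
  exists (mkposreal _ Hm). intros z Hz. change (Rabs (z - s) < Rmin d (T - s)) in Hz.
  pose proof (Rmin_l d (T - s)). pose proof (Rmin_r d (T - s)).
  change (Rabs (y'_ext z - y'_ext s) < eps). unfold y'_ext. rewrite (Rmax_right 0 s) by lra.
  apply Rabs_lt_between in Hz. apply Hdd.
  - destruct (Rle_lt_dec 0 z); [rewrite Rmax_right | rewrite Rmax_left]; try lra;
      apply Rabs_lt_between; lra.
  - split; [apply Rmax_l | apply Rmax_lub; lra].
Qed.

Lemma abs_y'_ext_ex a b : 0 <= a < T -> 0 <= b < T -> ex_RInt (fun s => Rabs (y'_ext s)) a b.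
Proof.
  intros Ha Hb. apply (ex_RInt_continuous (V := R_CompleteNormedModule)). intros z Hz.
  apply (continuous_comp y'_ext Rabs); [| apply continuous_Rabs].
  apply y'_ext_cont.
  pose proof (Rmin_glb a b 0 ltac:(lra) ltac:(lra)).
  pose proof (Rmax_lub_lt a b T ltac:(lra) ltac:(lra)). lra.
Qed.

Lemma y'_cont x : 0 < x < T -> continuous y' x.
Proof.
  intros Hx. apply filterlim_locally. intros eps.
  destruct (within_eps _ _ _ _ (Hc x ltac:(lra)) eps (cond_pos eps)) as [d [Hd0 Hdd]].
  assert (Hm : 0 < Rmin d (Rmin x (T - x))) by (apply Rmin_pos; [lra | apply Rmin_pos; lra]).
  exists (mkposreal _ Hm). intros z Hz. change (Rabs (z - x) < Rmin d (Rmin x (T - x))) in Hz.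
  pose proof (Rmin_l d (Rmin x (T - x))). pose proof (Rmin_r d (Rmin x (T - x))).
  pose proof (Rmin_l x (T - x)). pose proof (Rmin_r x (T - x)).
  change (Rabs (y' z - y' x) < eps). apply Hdd; [lra |]. apply Rabs_lt_between in Hz. lra.
Qed.

Lemma y_increment_bound_pos u v : 0 < u <= v -> v < T ->
  Rabs (y v - y u) <= RInt (fun s => Rabs (y'_ext s)) u v.
Proof.
  intros Hu Hv.
  assert (H : is_RInt y'_ext u v (y v - y u)).
  { apply (is_RInt_ext y').
    - intros x Hx. rewrite Rmin_left, Rmax_right in Hx by lra.
      unfold y'_ext. rewrite Rmax_right by lra. reflexivity.
    - apply (is_RInt_derive (V := R_CompleteNormedModule) y y');
        intros x Hx; rewrite Rmin_left, Rmax_right in Hx by lra;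
        [apply y_deriv | apply y'_cont]; lra. }
  rewrite <- (is_RInt_unique _ _ _ _ H). apply abs_RInt_le; [lra |]. exists (y v - y u). auto.
Qed.

(* The same bound including u = 0, by continuity of y at 0. *)
Lemma y_increment_bound u v : 0 <= u <= v -> v < T ->
  Rabs (y v - y u) <= RInt (fun s => Rabs (y'_ext s)) u v.
Proof.
  intros Hu Hv. destruct (Rlt_le_dec 0 u); [apply y_increment_bound_pos; lra |].
  assert (u = 0) by lra. subst u.
  destruct (Req_dec v 0) as [-> | Hv0].
  { rewrite RInt_point, Rminus_diag_eq, Rabs_R0 by reflexivity. apply Rle_refl. }
  apply le_epsilon. intros eps He.
  destruct (y_local_lipschitz 0 ltac:(lra)) as [d [Hd0 Hdd]].
  set (K := Rabs (y' 0) + 1). assert (HK : 0 < K) by (unfold K; pose proof (Rabs_pos (y' 0)); lra).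
  set (m := Rmin (d / 2) (Rmin v (eps / K))).
  assert (Hm0 : 0 < m) by (apply Rmin_pos; [lra | apply Rmin_pos; [lra | apply Rdiv_lt_0_compat; lra]]).
  pose proof (Rmin_l (d / 2) (Rmin v (eps / K))). pose proof (Rmin_r (d / 2) (Rmin v (eps / K))).
  pose proof (Rmin_l v (eps / K)). pose proof (Rmin_r v (eps / K)).
  set (u := m / 2).
  assert (Hu1 : 0 < u /\ u < d /\ u <= v /\ u <= eps / K) by (unfold u, m in *; lra).
  pose proof (y_increment_bound_pos u v ltac:(lra) Hv) as F1.
  specialize (Hdd u). rewrite Rminus_0_r, Rabs_right in Hdd by lra.
  specialize (Hdd ltac:(lra) ltac:(lra)). fold K in Hdd.
  assert (K * u <= eps).
  { apply Rle_trans with (K * (eps / K)); [apply Rmult_le_compat_l; lra | right; field; lra]. }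
  assert (RInt (fun s => Rabs (y'_ext s)) 0 u + RInt (fun s => Rabs (y'_ext s)) u v
          = RInt (fun s => Rabs (y'_ext s)) 0 v)
    by (apply (RInt_Chasles (V := R_CompleteNormedModule)); apply abs_y'_ext_ex; lra).
  assert (0 <= RInt (fun s => Rabs (y'_ext s)) 0 u)
    by (apply RInt_ge_0; [lra | apply abs_y'_ext_ex; lra | intros; apply Rabs_pos]).
  pose proof (Rabs_triang (y v - y u) (y u - y 0)).
  replace (y v - y u + (y u - y 0)) with (y v - y 0) in * by ring.
  lra.
Qed.

Section Weighted.
Variables t beta : R.
Hypothesis Ht : 0 < t < T.
Hypothesis Hb : 0 < beta < 1.

Definition weighted (s : R) : R := Rpower (t - s) (- beta) * Rabs (y'_ext s).

Lemma sing_weight_cont s : s < t -> continuous (fun u => Rpower (t - u) (- beta)) s.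
Proof.
  intros Hs. apply (ex_derive_continuous (K := R_AbsRing) (V := R_NormedModule)).
  apply (ex_derive_comp (fun u => Rpower u (- beta)) (fun u => t - u)).
  - exists (- beta * Rpower (t - s) (- beta - 1)).
    apply is_derive_Reals, derivable_pt_lim_power. lra.
  - auto_derive. auto.
Qed.

Lemma weighted_ex a b : 0 <= a < t -> 0 <= b < t -> ex_RInt weighted a b.
Proof.
  intros Ha Hb'. apply (ex_RInt_continuous (V := R_CompleteNormedModule)). intros z Hz.
  pose proof (Rmax_lub_lt a b t ltac:(lra) ltac:(lra)).
  pose proof (Rmin_glb a b 0 ltac:(lra) ltac:(lra)).
  apply (continuous_mult (K := R_AbsRing) (fun u => Rpower (t - u) (- beta)) (fun u => Rabs (y'_ext u))).
  - apply sing_weight_cont; lra.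
  - apply (continuous_comp y'_ext Rabs); [apply y'_ext_cont; lra | apply continuous_Rabs].
Qed.

Lemma weighted_eq a b : 0 <= a -> 0 <= b -> forall x, Rmin a b < x < Rmax a b ->
  weighted x = Rpower (t - x) (- beta) * Rabs (y' x).
Proof.
  intros Ha Hb' x Hx. pose proof (Rmin_glb a b 0 ltac:(lra) ltac:(lra)).
  unfold weighted, y'_ext. rewrite Rmax_right by lra. reflexivity.
Qed.

(* |y v - y u| (t-u)^-beta <= int_u^v (t-s)^-beta |y'(s)| ds, since the
   singular weight is smallest at the left end. *)
Lemma increment_weighted_bound u v : 0 <= u <= v -> v < t ->
  Rabs (y v - y u) * Rpower (t - u) (- beta) <= RInt weighted u v.
Proof.
  intros Huv Hvt.
  rewrite Rmult_comm. apply Rle_trans with (Rpower (t - u) (- beta) * RInt (fun s => Rabs (y'_ext s)) u v).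
  { apply Rmult_le_compat_l; [left; apply Rpower_pos | apply y_increment_bound; lra]. }
  rewrite <- (RInt_scal (V := R_CompleteNormedModule) (fun s => Rabs (y'_ext s))) by (apply abs_y'_ext_ex; lra).
  apply RInt_le; [lra | | apply weighted_ex; lra |].
  - apply (ex_RInt_scal (V := R_CompleteNormedModule) (fun s => Rabs (y'_ext s))).
    apply abs_y'_ext_ex; lra.
  - intros x Hx. unfold weighted. apply Rmult_le_compat_r; [apply Rabs_pos |].
    apply Rpower_antitone; lra.
Qed.

Lemma sing_weight_integral_bound v : 0 <= v < t ->
  RInt (fun s => Rpower (t - s) (- beta)) 0 v <= Rpower t (1 - beta) / (1 - beta).
Proof.
  intros Hv.
  set (F := fun s => - Rpower (t - s) (1 - beta) / (1 - beta)).
  assert (H : is_RInt (fun s => Rpower (t - s) (- beta)) 0 v (F v - F 0)).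
  { apply (is_RInt_derive (V := R_CompleteNormedModule) F);
      intros x Hx; rewrite Rmin_left, Rmax_right in Hx by lra.
    - assert (D : is_derive (fun u => Rpower u (1 - beta)) (t - x) ((1 - beta) * Rpower (t - x) (1 - beta - 1)))
        by (apply is_derive_Reals, derivable_pt_lim_power; lra).
      unfold F. auto_derive.
      + exists ((1 - beta) * Rpower (t - x) (1 - beta - 1)).
        replace (t + - x) with (t - x) by ring. auto.
      + replace (t + - x) with (t - x) by ring. rewrite (is_derive_unique (fun u : R => Rpower u (1 - beta)) (t - x) _ D).
        replace (1 - beta - 1) with (- beta) by ring. field. lra.
    - apply sing_weight_cont; lra. }
  rewrite (is_RInt_unique _ _ _ _ H). unfold F. rewrite Rminus_0_r.
  pose proof (Rpower_pos (t - v) (1 - beta)).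
  assert (0 < / (1 - beta)) by (apply Rinv_0_lt_compat; lra). unfold Rdiv. nra.
Qed.

Lemma weighted_partial_bounded : exists M, forall v, 0 <= v < t -> RInt weighted 0 v <= M.
Proof.
  destruct (continuity_ab_maj (fun s => Rabs (y'_ext s)) 0 t ltac:(lra)) as [Mx [HMx _]].
  { intros c Hc0. apply continuity_pt_filterlim.
    apply (continuous_comp y'_ext Rabs); [apply y'_ext_cont; lra | apply continuous_Rabs]. }
  set (K := Rabs (y'_ext Mx)).
  assert (Hsing : forall v, 0 <= v < t -> ex_RInt (fun s => Rpower (t - s) (- beta)) 0 v).
  { intros v Hv. apply (ex_RInt_continuous (V := R_CompleteNormedModule)). intros z Hz.
    rewrite Rmin_left, Rmax_right in Hz by lra. apply sing_weight_cont; lra. }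
  exists (K * (Rpower t (1 - beta) / (1 - beta))). intros v Hv.
  apply Rle_trans with (RInt (fun s => K * Rpower (t - s) (- beta)) 0 v).
  - apply RInt_le; [lra | apply weighted_ex; lra |
      apply (ex_RInt_scal (V := R_CompleteNormedModule)); auto |].
    intros x Hx. unfold weighted. rewrite Rmult_comm.
    apply Rmult_le_compat_r; [left; apply Rpower_pos | apply HMx; lra].
  - rewrite (RInt_scal (V := R_CompleteNormedModule)) by auto.
    apply Rmult_le_compat_l; [apply Rabs_pos | apply sing_weight_integral_bound; lra].
Qed.

Lemma weighted_integral_exists : exists I,
  is_RInt_gen (fun s => Rpower (t - s) (- beta) * Rabs (y' s)) (at_point 0) (at_left t) I /\
  forall v, 0 <= v < t -> RInt weighted 0 v <= I.
Proof.
  destruct weighted_partial_bounded as [M HM].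
  set (w := fun s => Rpower (t - s) (- beta) * Rabs (y' s)).
  destruct (improper_at_left w 0 t M ltac:(lra)) as [I [HI HIb]].
  - intros a b Ha Hb'. apply (ex_RInt_ext weighted); [apply weighted_eq; lra | apply weighted_ex; lra].
  - intros x Hx. apply Rmult_le_pos; [left; apply Rpower_pos | apply Rabs_pos].
  - intros v Hv. rewrite <- (RInt_ext weighted) by (apply weighted_eq; lra). apply HM; auto.
  - exists I. split; auto. intros v Hv.
    rewrite (RInt_ext weighted w) by (apply weighted_eq; lra). apply HIb; auto.
Qed.

Lemma RInt_weighted_cells h m : 0 < h -> INR m * h < t ->
  sum_lt (fun i => RInt weighted (INR i * h) (INR (S i) * h)) m = RInt weighted 0 (INR m * h).
Proof.
  intros Hh Hm. induction m.
  - simpl. rewrite Rmult_0_l, RInt_point. reflexivity.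
  - rewrite sum_lt_S. rewrite S_INR in Hm.
    assert (0 <= INR m * h) by (pose proof (pos_INR m); nra).
    rewrite IHm by lra. rewrite S_INR.
    apply (RInt_Chasles (V := R_CompleteNormedModule) weighted); apply weighted_ex; lra.
Qed.

Lemma mesh_weighted_bound h m : 0 < h -> INR m * h < t ->
  sum_lt (fun i => Rabs (y (INR (S i) * h) - y (INR i * h)) * Rpower (t - INR i * h) (- beta)) m
  <= RInt weighted 0 (INR m * h).
Proof.
  intros Hh Hm. rewrite <- RInt_weighted_cells by lra. apply sum_lt_le. intros i Hi.
  assert (INR (S i) <= INR m) by (apply le_INR; lia).
  pose proof (pos_INR i).
  apply increment_weighted_bound; rewrite ?S_INR in *; [split |]; nra.
Qed.

(* Including the last cell [t - h, t]: its contribution is the limit of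
   the cells [t - h, v] as v -> t, by continuity of y at t. *)
Lemma mesh_weighted_bound_to_t I h m : 0 < h -> INR (S m) * h = t ->
  (forall v, 0 <= v < t -> RInt weighted 0 v <= I) ->
  sum_lt (fun i => Rabs (y (INR (S i) * h) - y (INR i * h)) * Rpower (t - INR i * h) (- beta)) (S m) <= I.
Proof.
  intros Hh Hmh HIw. rewrite sum_lt_S, S_INR in *.
  set (Sm := sum_lt (fun i => Rabs (y (INR (S i) * h) - y (INR i * h)) * Rpower (t - INR i * h) (- beta)) m).
  assert (Hm0 : 0 <= INR m * h) by (pose proof (pos_INR m); nra).
  replace ((INR m + 1) * h) with t by lra. replace (t - INR m * h) with h by lra.
  assert (HSm : Sm <= RInt weighted 0 (INR m * h)) by (apply mesh_weighted_bound; lra).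
  destruct (y_local_lipschitz t ltac:(lra)) as [d [Hd0 Hlip]].
  apply (le_at_left_endpoint (fun v => Sm + Rabs (y v - y (INR m * h)) * Rpower h (- beta)) t I
           ((Rabs (y' t) + 1) * Rpower h (- beta)) (Rmin d h)); [apply Rmin_pos; lra | |];
    intros v Hv; pose proof (Rmin_l d h); pose proof (Rmin_r d h).
  - replace h with (t - INR m * h) at 2 by lra.
    pose proof (increment_weighted_bound (INR m * h) v ltac:(lra) ltac:(lra)).
    assert (RInt weighted 0 (INR m * h) + RInt weighted (INR m * h) v = RInt weighted 0 v)
      by (apply (RInt_Chasles (V := R_CompleteNormedModule) weighted); apply weighted_ex; lra).
    pose proof (HIw v ltac:(lra)). lra.
  - assert (Hvt : Rabs (v - t) = t - v) by (rewrite Rabs_left1; lra).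
    specialize (Hlip v ltac:(lra) ltac:(lra)). rewrite Hvt, Rabs_minus_sym in Hlip.
    pose proof (Rabs_triang (y t - y v) (y v - y (INR m * h))).
    replace (y t - y v + (y v - y (INR m * h))) with (y t - y (INR m * h)) in * by ring.
    pose proof (Rpower_pos h (- beta)).
    assert (Rabs (y t - y (INR m * h)) * Rpower h (- beta)
            <= (Rabs (y t - y v) + Rabs (y v - y (INR m * h))) * Rpower h (- beta))
      by (apply Rmult_le_compat_r; lra).
    assert (Rabs (y t - y v) * Rpower h (- beta) <= (Rabs (y' t) + 1) * (t - v) * Rpower h (- beta))
      by (apply Rmult_le_compat_r; lra).
    lra.
Qed.

Lemma weighted_variation_bound : exists I,
  is_RInt_gen (fun s => Rpower (t - s) (- beta) * Rabs (y' s)) (at_point 0) (at_left t) I /\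
  forall n, (1 <= n)%nat ->
  sum_lt (fun i => Rabs (y (INR (S i) * (t / INR n)) - y (INR i * (t / INR n)))
                   * Rpower (INR (n - i)) (- beta)) n
  <= Rpower (t / INR n) beta * I.
Proof.
  destruct weighted_integral_exists as [I [HI HIw]].
  exists I. split; auto. intros n Hn.
  set (h := t / INR n).
  assert (Hn0 : 0 < INR n) by (apply INR_pos1; auto).
  assert (Hh : 0 < h) by (unfold h; apply Rdiv_lt_0_compat; lra).
  assert (Hnh : INR n * h = t) by (unfold h; field; lra).
  (* (n - i)^-beta = h^beta (t - t_i)^-beta *)
  rewrite (sum_lt_ext _ (fun i => Rpower h beta *
      (Rabs (y (INR (S i) * h) - y (INR i * h)) * Rpower (t - INR i * h) (- beta)))).
  2:{ intros i Hi.
      replace (t - INR i * h) with (INR (n - i) * h) by (rewrite minus_INR by lia; lra).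
      rewrite <- Rpower_mult_distr by (try (apply INR_pos1; lia); lra).
      replace (Rpower h beta * (Rabs (y (INR (S i) * h) - y (INR i * h)) * (Rpower (INR (n - i)) (- beta) * Rpower h (- beta))))
        with (Rabs (y (INR (S i) * h) - y (INR i * h)) * Rpower (INR (n - i)) (- beta) * (Rpower h beta * Rpower h (- beta)))
        by ring.
      rewrite <- Rpower_plus, Rplus_opp_r, Rpower_O, Rmult_1_r by lra. reflexivity. }
  rewrite sum_lt_scal. apply Rmult_le_compat_l; [left; apply Rpower_pos |].
  destruct n as [| m]; [lia |].
  apply mesh_weighted_bound_to_t; auto.
Qed.

End Weighted.
End C1Function.

Lemma Rpower_neg_small beta eps : 0 < beta -> 0 < eps ->
  exists J, forall j, (J <= j)%nat -> (1 <= j)%nat /\ Rpower (INR j) (- beta) <= eps.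
Proof.
  intros Hb He.
  set (X := Rpower (/ eps) (/ beta)).
  destruct (INR_archimed 1 X ltac:(lra)) as [J HJ]. rewrite Rmult_1_r in HJ.
  exists (S J). intros j Hj. split; [lia |].
  assert (HX : 0 < X) by apply Rpower_pos.
  assert (HXj : X <= INR j) by (apply Rle_trans with (INR (S J)); [rewrite S_INR; lra | apply le_INR; auto]).
  assert (Hpow : / eps <= Rpower (INR j) beta).
  { replace (/ eps) with (Rpower X beta).
    - apply Rle_Rpower_l; lra.
    - unfold X. rewrite Rpower_mult. replace (/ beta * beta) with 1 by (field; lra).
      apply Rpower_1, Rinv_0_lt_compat; lra. }
  rewrite Rpower_Ropp. rewrite <- (Rinv_inv eps).
  apply Rinv_le_contravar; [apply Rinv_0_lt_compat; lra | exact Hpow].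
Qed.

Lemma kernel_error alpha j : 0 < alpha < 1 -> (1 <= j)%nat ->
  Rabs (kernel alpha (1 - alpha) j - Gamma (1 + alpha) * Gamma (2 - alpha))
  <= 6 * Rpower (INR j) (- Rmin alpha (1 - alpha)).
Proof.
  intros Ha Hj. set (beta := Rmin alpha (1 - alpha)).
  assert (Hb : 0 < beta) by (apply Rmin_pos; lra).
  pose proof (Rmin_l alpha (1 - alpha)). pose proof (Rmin_r alpha (1 - alpha)).
  assert (HA' : 0 < 1 - alpha < 1) by lra. assert (HAB : alpha + (1 - alpha) = 1) by ring.
  destruct (kernel_limit alpha (1 - alpha) beta Ha HA' HAB Hb ltac:(unfold beta; lra) ltac:(unfold beta; lra))
    as [L [HL HK]].
  replace (2 - alpha) with (1 + (1 - alpha)) by ring.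
  assert (HLG : L = Gamma (1 + alpha) * Gamma (1 + (1 - alpha))).
  { apply Rle_antisym.
    - apply kernel_inf_le_Gamma; auto. intros k Hk. apply HK; auto.
    - apply Gamma_le_kernel_limit; auto. intros eps He.
      destruct (Rpower_neg_small beta (eps / 6) Hb ltac:(lra)) as [J HJ].
      exists J. intros k Hk. destruct (HJ k Hk) as [Hk1 Hk2].
      destruct (HK k Hk1). lra. }
  rewrite <- HLG. destruct (HK j Hj). rewrite Rabs_right by lra. lra.
Qed.

Lemma Gamma_product_pos alpha : 0 < alpha < 1 -> 0 < Gamma (1 + alpha) * Gamma (2 - alpha).
Proof.
  intros Ha. replace (2 - alpha) with (1 + (1 - alpha)) by ring.
  apply Rmult_lt_0_compat; apply Gamma_pos; lra.
Qed.

Lemma Jd_deltad a h u n : 0 < h ->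
  Jd a h (deltad a h u) n = / (Gamma (1 + a) * Gamma (2 - a)) *
    sum_lt (fun i => kernel a (1 - a) (n - i) * (u (S i) - u i)) n.
Proof.
  intros Hh. unfold Jd, deltad.
  set (F := fun m i => bw a (n - m) * bw (1 - a) (S m - i) * (u (S i) - u i)).
  (* the inner L1 sum of length m+1 is extended to length n by zeros *)
  rewrite (sum_lt_ext _ (fun m => Rpower h (- a) / Gamma (2 - a) * sum_lt (F m) n)).
  2:{ intros m Hm.
      rewrite (sum_lt_extend_zero (fun i => bw (1 - a) (S m - i) * (u (S i) - u i)) (S m) n)
        by (try lia; intros i Hi; replace (S m - i)%nat with O by lia; rewrite bw_0; ring).
      unfold F. rewrite <- !sum_lt_scal. apply sum_lt_ext. intros i _. ring. }
  rewrite sum_lt_scal, (sum_lt_swap F).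
  (* for fixed i, the sum over m is the kernel K_(n-i) *)
  rewrite (sum_lt_ext (fun i => sum_lt (fun m => F m i) n)
             (fun i => kernel a (1 - a) (n - i) * (u (S i) - u i))).
  2:{ intros i Hi. unfold F.
      rewrite (sum_lt_ext _ (fun m => (u (S i) - u i) * (bw a (n - m) * bw (1 - a) (S m - i))))
        by (intros; ring).
      rewrite sum_lt_scal, Rmult_comm. f_equal.
      replace n with (i + (n - i))%nat at 1 by lia. rewrite sum_lt_app.
      rewrite (sum_lt_ext (fun m => bw a (n - m) * bw (1 - a) (S m - i)) (fun _ => 0) i)
        by (intros m Hm; replace (S m - i)%nat with O by lia; rewrite bw_0; ring).
      rewrite sum_lt_const, Rmult_0_r, Rplus_0_l. unfold kernel. apply sum_lt_ext. intros q Hq.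
      replace (n - (i + q))%nat with (n - i - q)%nat by lia.
      replace (S (i + q) - i)%nat with (S q) by lia. reflexivity. }
  assert (Hp : Rpower h a * Rpower h (- a) = 1)
    by (rewrite <- Rpower_plus, Rplus_opp_r; apply Rpower_O; lra).
  rewrite Rinv_mult. unfold Rdiv.
  transitivity ((Rpower h a * Rpower h (- a)) * (/ Gamma (1 + a) * / Gamma (2 - a)) *
                sum_lt (fun i => kernel a (1 - a) (n - i) * (u (S i) - u i)) n); [ring |].
  rewrite Hp. ring.
Qed.

(* Since y_n - y_0 telescopes, r_n = sum_{i<n} (K_(n-i)/G - 1) (y_(i+1) - y_i). *)
Lemma remainder_eq alpha h y n : 0 < h -> 0 < Gamma (1 + alpha) * Gamma (2 - alpha) ->
  JdeltaY alpha h y n - y (INR n * h) + y 0 =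
  sum_lt (fun i => (y (INR (S i) * h) - y (INR i * h)) *
    (kernel alpha (1 - alpha) (n - i) / (Gamma (1 + alpha) * Gamma (2 - alpha)) - 1)) n.
Proof.
  intros Hh HG. unfold JdeltaY. rewrite Jd_deltad by auto.
  set (G := Gamma (1 + alpha) * Gamma (2 - alpha)).
  symmetry. rewrite (sum_lt_ext _ (fun i => / G * (kernel alpha (1 - alpha) (n - i) * (y (INR (S i) * h) - y (INR i * h)))
                                  - (y (INR (S i) * h) - y (INR i * h))))
    by (intros; unfold Rdiv; ring).
  rewrite sum_lt_minus, sum_lt_scal, (sum_lt_telescope (fun k => y (INR k * h))).
  simpl INR. rewrite Rmult_0_l. ring.
Qed.

Lemma remainder_bound alpha (D : nat -> R) n : 0 < alpha < 1 ->
  Rabs (sum_lt (fun i => D i *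
    (kernel alpha (1 - alpha) (n - i) / (Gamma (1 + alpha) * Gamma (2 - alpha)) - 1)) n)
  <= 6 / (Gamma (1 + alpha) * Gamma (2 - alpha)) *
     sum_lt (fun i => Rabs (D i) * Rpower (INR (n - i)) (- Rmin alpha (1 - alpha))) n.
Proof.
  intros Ha. set (G := Gamma (1 + alpha) * Gamma (2 - alpha)).
  assert (HG : 0 < G) by (apply Gamma_product_pos; lra).
  eapply Rle_trans; [apply sum_lt_abs |].
  rewrite <- sum_lt_scal. apply sum_lt_le. intros i Hi. rewrite Rabs_mult.
  pose proof (kernel_error alpha (n - i) Ha ltac:(lia)) as HK. fold G in HK.
  replace (kernel alpha (1 - alpha) (n - i) / G - 1) with ((kernel alpha (1 - alpha) (n - i) - G) / G)
    by (field; lra).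
  rewrite Rabs_div, (Rabs_right G) by lra.
  pose proof (Rabs_pos (D i)).
  assert (Rabs (kernel alpha (1 - alpha) (n - i) - G) / G
          <= 6 / G * Rpower (INR (n - i)) (- Rmin alpha (1 - alpha))).
  { unfold Rdiv.
    replace (6 * / G * Rpower (INR (n - i)) (- Rmin alpha (1 - alpha)))
      with (6 * Rpower (INR (n - i)) (- Rmin alpha (1 - alpha)) * / G) by ring.
    apply Rmult_le_compat_r; [left; apply Rinv_0_lt_compat; lra | exact HK]. }
  apply Rle_trans with (Rabs (D i) * (6 / G * Rpower (INR (n - i)) (- Rmin alpha (1 - alpha))));
    [apply Rmult_le_compat_l; auto | right; ring].
Qed.

Theorem theorem2 (alpha T : R) (y y' : R -> R) :
  0 < alpha < 1 -> 0 < T ->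
  (* y in C^1([0,T]) with derivative y' (one-sided at the endpoints) *)
  (forall x, 0 <= x <= T ->
     filterlim (fun d => (y (x + d) - y x) / d)
       (within (fun d => d <> 0 /\ 0 <= x + d <= T) (locally 0))
       (locally (y' x))) ->
  (forall x, 0 <= x <= T ->
     filterlim y' (within (fun z => 0 <= z <= T) (locally x)) (locally (y' x))) ->
  let beta := Rmin alpha (1 - alpha) in
  exists C : R, forall t : R, 0 < t < T ->
    exists I : R,
      is_RInt_gen (fun s => Rpower (t - s) (- beta) * Rabs (y' s))
        (at_point 0) (at_left t) I /\
      exists n0 : nat, forall n : nat, (n0 <= n)%nat ->
        let h := t / INR n in
        let r_n := JdeltaY alpha h y n - y (INR n * h) + y 0 in
        Rabs r_n <= C * Rpower h beta * I.
Proof.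
  intros Ha HT Hd Hc beta.
  assert (Hb : 0 < beta < 1) by (unfold beta; pose proof (Rmin_r alpha (1 - alpha)); split; [apply Rmin_pos |]; lra).
  set (G := Gamma (1 + alpha) * Gamma (2 - alpha)).
  assert (HG : 0 < G) by (apply Gamma_product_pos; lra).
  exists (6 / G). intros t Ht.
  destruct (weighted_variation_bound T y y' HT Hd Hc t beta Ht Hb) as [I [HI Hvar]].
  exists I. split; [exact HI |]. exists 1%nat. intros n Hn h r_n.
  assert (Hh : 0 < h) by (apply Rdiv_lt_0_compat; [lra | apply INR_pos1; auto]).
  unfold r_n. rewrite remainder_eq by auto.
  eapply Rle_trans; [apply remainder_bound; auto |]. fold G.
  rewrite Rmult_assoc. apply Rmult_le_compat_l; [left; apply Rdiv_lt_0_compat; lra |].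
  apply Hvar; auto.
Qed.
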